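(* An affine theory $T$ is inductive (the union of every chain of models of $T$ is a model of $T$) if and only if it is a $\forall\exists$-theory, i.e. it can be axiomatized by conditions of the form $0\le\inf_{\bar x}\sup_{\bar y}\phi(\bar x,\bar y)$ with $\phi$ quantifier-free.
   Context: Setting: affine continuous logic over a Lipschitz language $L$; structures are metric spaces of diameter $\le1$ with Lipschitz interpretations; affine formulas are built from atomic formulas $1$, $d(t_1,t_2)$, $R(\bar t)$ by $+$, multiplication by real scalars, $\sup_x$, $\inf_x$; quantifier-free formulas are real linear combinations of atomic formulas. A theory is a set of closed conditions $\sigma\le\eta$ between sentences. A chain of models $M_0\subseteq M_1\subseteq\cdots$ is a chain under substructure inclusion; its union carries the obvious structure. *)

From HB Require Import structures.
From mathcomp Require Import all_boot all_order all_algebra.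
From mathcomp Require Import classical_sets reals.
Set Implicit Arguments. Unset Strict Implicit. Unset Printing Implicit Defensive.
Import Order.TTheory GRing.Theory Num.Theory.
Local Open Scope ring_scope.
Local Open Scope classical_set_scope.

Section Affine.
Variable R : realType.

Record Lang := {
  Fsym : Type; farity : Fsym -> nat; fLip : Fsym -> R;
  fLip_ge0 : forall f, 0 <= fLip f;
  Rsym : Type; rarity : Rsym -> nat; rLip : Rsym -> R;
  rLip_ge0 : forall r, 0 <= rLip r }.

Variable L : Lang.

Record Struc := {
  carrier :> Type;
  st_dist : carrier -> carrier -> R;
  st_inh : inhabited carrier;
  dist_refl : forall x, st_dist x x = 0;
  dist_sep : forall x y, st_dist x y = 0 -> x = y;
  dist_sym : forall x y, st_dist x y = st_dist y x;
  dist_tri : forall x y z, st_dist x z <= st_dist x y + st_dist y z;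
  dist_le1 : forall x y, st_dist x y <= 1;
  funI : forall f : Fsym L, ('I_(farity f) -> carrier) -> carrier;
  relI : forall r : Rsym L, ('I_(rarity r) -> carrier) -> R;
  funI_lip : forall f a b, st_dist (funI a) (funI b)
      <= fLip f * \sum_(i < farity f) st_dist (a i) (b i);
  relI_lip : forall r a b, `|relI a - relI b|
      <= rLip r * \sum_(i < rarity r) st_dist (a i) (b i) }.

Inductive term :=
  | Var : nat -> term
  | App : forall f : Fsym L, ('I_(farity f) -> term) -> term.

Inductive formula :=
  | One : formula
  | Dist : term -> term -> formula
  | Rel : forall r : Rsym L, ('I_(rarity r) -> term) -> formula
  | Add : formula -> formula -> formula
  | Scale : R -> formula -> formula
  | Sup : nat -> formula -> formula
  | Inf : nat -> formula -> formula.

Fixpoint tfree (x : nat) (t : term) : Prop :=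
  match t with
  | Var n => n = x
  | App f args => exists i, tfree x (args i)
  end.

Fixpoint ffree (x : nat) (phi : formula) : Prop :=
  match phi with
  | One => False
  | Dist t1 t2 => tfree x t1 \/ tfree x t2
  | Rel r args => exists i, tfree x (args i)
  | Add p q => ffree x p \/ ffree x q
  | Scale _ p => ffree x p
  | Sup y p => y <> x /\ ffree x p
  | Inf y p => y <> x /\ ffree x p
  end.

Definition sentence (phi : formula) : Prop := forall x, ~ ffree x phi.

Fixpoint qfree (phi : formula) : Prop :=
  match phi with
  | One | Dist _ _ | Rel _ _ => True
  | Add p q => qfree p /\ qfree q
  | Scale _ p => qfree p
  | Sup _ _ | Inf _ _ => False
  end.

Definition upd (M : Struc) (v : nat -> M) (x : nat) (a : M) : nat -> M :=
  fun n => if n == x then a else v n.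

Fixpoint tval (M : Struc) (v : nat -> M) (t : term) : M :=
  match t with
  | Var n => v n
  | App f args => funI (fun i => tval v (args i))
  end.

Fixpoint fval (M : Struc) (v : nat -> M) (phi : formula) : R :=
  match phi with
  | One => 1
  | Dist t1 t2 => st_dist (tval v t1) (tval v t2)
  | Rel r args => relI (fun i => tval v (args i))
  | Add p q => fval v p + fval v q
  | Scale c p => c * fval v p
  | Sup x p => sup (range (fun a : M => fval (upd v x a) p))
  | Inf x p => inf (range (fun a : M => fval (upd v x a) p))
  end.

(** Conditions sigma <= eta; theories are sets of closed conditions. *)
Definition condition := (formula * formula)%type.
Definition theory := set condition.

Definition closed_theory (T : theory) : Prop :=
  forall c, T c -> sentence c.1 /\ sentence c.2.

Definition models (M : Struc) (T : theory) : Prop :=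
  forall c, T c -> forall v : nat -> M, fval v c.1 <= fval v c.2.

(** Substructure inclusion (up to identification): an embedding. *)
Definition embedding (M N : Struc) (e : M -> N) : Prop :=
  [/\ forall x y, st_dist (e x) (e y) = st_dist x y,
      forall f a, e (funI a) = @funI N f (fun i => e (a i)) &
      forall r a, @relI N r (fun i => e (a i)) = relI a].

Definition is_union (Ms : nat -> Struc) (es : forall n, Ms n -> Ms n.+1)
    (N : Struc) (gs : forall n, Ms n -> N) : Prop :=
  [/\ forall n, embedding (gs n),
      forall n x, gs n.+1 (es n x) = gs n x &
      forall y : N, exists n (x : Ms n), gs n x = y].

Definition inductive (T : theory) : Prop :=
  forall (Ms : nat -> Struc) (es : forall n, Ms n -> Ms n.+1),
    (forall n, embedding (es n)) ->
    (forall n, models (Ms n) T) ->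
    forall (N : Struc) (gs : forall n, Ms n -> N),
      is_union es gs -> models N T.

Definition zero_f : formula := Scale 0 One.

Definition AE_condition (c : condition) : Prop :=
  sentence c.2 /\ c.1 = zero_f /\
  exists (xs ys : seq nat) (phi : formula),
    qfree phi /\ c.2 = foldr Inf (foldr Sup phi ys) xs.

Definition AE_theory (T : theory) : Prop :=
  exists T' : theory, (forall c, T' c -> AE_condition c) /\
    forall M : Struc, models M T <-> models M T'.

End Affine.

From HB Require Import structures.
From Stdlib Require Cantor.
From mathcomp Require Import all_boot all_order all_algebra.
From mathcomp Require Import classical_sets reals boolp filter.
From mathcomp Require Import ring lra zify.
Set Implicit Arguments. Unset Strict Implicit. Unset Printing Implicit Defensive.
Import Order.TTheory GRing.Theory Num.Theory.
Local Open Scope ring_scope.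
Local Open Scope classical_set_scope.

(* A forall-exists condition is preserved by unions of chains: its finitely many universal
   parameters already live in one member of the chain, and the existential witnesses found
   there remain witnesses in the union.

   Conversely, let [T] be inductive and let [M] satisfy all forall-exists consequences of [T].
   Then [M] embeds into a model [N] of [T] so that sups of quantifier-free formulas with
   parameters in [M] do not grow, and such an [N] embeds, over [M], into an elementary
   extension [M1] of [M], which again satisfies the forall-exists consequences of [T].
   Iterating yields a chain [M <= N0 <= M1 <= N1 <= ...]; its union is the union of the
   models [Nn] of [T], hence a model of [T], and the union of the elementary chain of the
   [Mn], hence an elementary extension of [M]. So [M] is a model of [T].

   Both extensions are ultraproducts of finite approximations. These come from a minimax
   argument: since affine formulas commute with convex combinations of structures, the
   vectors of errors realizable in models form a convex set, and a weighted average of the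
   errors that is uniformly large would contradict a single forall-exists consequence of [T]
   (for [N]), resp. the preservation of sups along [M -> N] (for [M1]). *)

Notation Sups ys phi := (foldr (@Sup _ _) phi ys).
Notation Infs xs phi := (foldr (@Inf _ _) phi xs).

(** * Semantics of formulas *)

Section SupRange.
Variable R : realType.
Implicit Types (T : Type) (B r : R).

Lemma le_sup_range T (f : T -> R) B :
  (forall x, f x <= B) -> forall x, f x <= sup (range f).
Proof.
move=> hB x; apply: sup_upper_bound; last by exists x.
by split; [exists (f x), x | exists B => _ [y _ <-]].
Qed.

Lemma sup_range_le T (f : T -> R) B :
  inhabited T -> (forall x, f x <= B) -> sup (range f) <= B.
Proof. by case=> x0 hB; apply: ge_sup => [|_ [y _ <-]]; [exists (f x0), x0|]. Qed.

Lemma sup_range_adherent T (f : T -> R) B :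
  inhabited T -> (forall x, f x <= B) -> forall e, 0 < e ->
  exists x, sup (range f) - e < f x.
Proof.
case=> x0 hB e he.
have hs : has_sup (range f).
  by split; [exists (f x0), x0 | exists B => _ [y _ <-]].
by have [_ [x _ <-] h] := sup_adherent he hs; exists x.
Qed.

Lemma sup_rangeE T (f : T -> R) r :
  (forall x, f x <= r) -> (forall e, 0 < e -> exists x, r - e < f x) ->
  sup (range f) = r.
Proof.
move=> hub hadh; have [x0 _] := hadh 1 ltr01.
apply/le_anti/andP; split; first exact: sup_range_le hub.
apply/ler_addgt0Pr => e he; have [x hx] := hadh e he.
by have := le_sup_range hub x; lra.
Qed.

Lemma normr_sup_range_le T (f : T -> R) B :
  inhabited T -> (forall x, `|f x| <= B) -> `|sup (range f)| <= B.
Proof.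
move=> hT hB.
have hB1 x : f x <= B by have := hB x; rewrite ler_norml => /andP[].
have hB2 x : - B <= f x by have := hB x; rewrite ler_norml => /andP[].
rewrite ler_norml (sup_range_le hT hB1) andbT.
by case: hT => x0; have := le_sup_range hB1 x0; have := hB2 x0; lra.
Qed.

Lemma inf_rangeE T (f : T -> R) :
  inf (range f) = - sup (range (fun x => -1 * f x)).
Proof.
rewrite /inf; congr (- sup _); rewrite eqEsubset; split=> y.
  by case=> _ [x _ <-] <-; exists x => //; rewrite mulN1r.
by case=> x _ <-; exists (f x); [exists x|rewrite mulN1r].
Qed.

End SupRange.

Section Semantics.
Variables (R : realType) (L : Lang R).
Implicit Types (M N K : Struc L) (phi : formula L).

Lemma dist_ge0 M (x y : M) : 0 <= st_dist x y.
Proof. by have := dist_tri x y x; rewrite dist_refl (dist_sym y x); lra. Qed.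

Definition pt M : M := sval (cid (let: inhabits x := st_inh M in ex_intro _ x I)).

Lemma sum_dist_le M n (a b : 'I_n -> M) :
  \sum_(i < n) st_dist (a i) (b i) <= n%:R.
Proof.
apply: le_trans (ler_sum _ (fun i _ => dist_le1 (a i) (b i))) _.
by rewrite sumr_const card_ord.
Qed.

Lemma relI_norm_le M r (x : M) (a : 'I_(rarity r) -> M) :
  `|relI a| <= `|relI (fun _ : 'I_(rarity r) => x)| + rLip r * (rarity r)%:R.
Proof.
have h := relI_lip a (fun _ => x).
have h' : rLip r * \sum_(i < rarity r) st_dist (a i) x <= rLip r * (rarity r)%:R.
  by rewrite ler_wpM2l ?rLip_ge0 ?sum_dist_le.
have := ler_dist_dist (relI a) (relI (fun _ : 'I_(rarity r) => x)).
by rewrite ler_norml => /andP[_]; lra.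
Qed.

Lemma fval_bounded M phi : exists B, forall v : nat -> M, `|fval v phi| <= B.
Proof.
elim: phi.
- by exists 1 => v /=; rewrite normr1.
- by move=> t1 t2; exists 1 => v /=; rewrite ger0_norm ?dist_ge0 ?dist_le1.
- move=> r args; exists (`|relI (fun _ : 'I_(rarity r) => pt M)| + rLip r * (rarity r)%:R) => v.
  exact: relI_norm_le.
- move=> p [B1 h1] q [B2 h2]; exists (B1 + B2) => v /=.
  by apply: le_trans (ler_normD _ _) _; apply: lerD.
- by move=> c p [B h]; exists (`|c| * B) => v /=; rewrite normrM ler_wpM2l.
- move=> x p [B h]; exists B => v /=.
  by apply: normr_sup_range_le (st_inh M) _ => a.
- move=> x p [B h]; exists B => v /=; rewrite inf_rangeE normrN.
  by apply: normr_sup_range_le (st_inh M) _ => a; rewrite mulN1r normrN.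
Qed.

Lemma fval_InfE M (v : nat -> M) x p :
  fval v (Inf x p) = - fval v (Sup x (Scale (-1) p)).
Proof. by rewrite /= inf_rangeE. Qed.

Lemma le_fval_Sup M (v : nat -> M) x p (a : M) :
  fval (upd v x a) p <= fval v (Sup x p).
Proof.
have [B hB] := fval_bounded M p.
apply: (le_sup_range (f := fun a => fval (upd v x a) p) (B := B)) => b.
by have := hB (upd v x b); rewrite ler_norml => /andP[].
Qed.

Lemma fval_Sup_adherent M (v : nat -> M) x p e : 0 < e ->
  exists a, fval v (Sup x p) - e < fval (upd v x a) p.
Proof.
have [B hB] := fval_bounded M p.
apply: (sup_range_adherent (st_inh M) (B := B)) => b.
by have := hB (upd v x b); rewrite ler_norml => /andP[].
Qed.

Lemma tval_agree M (v w : nat -> M) t :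
  (forall x, tfree x t -> v x = w x) -> tval v t = tval w t.
Proof.
elim: t => [n|f args IH] h /=; first exact: h.
by congr funI; apply: funext => i; apply: IH => x hx; apply: h; exists i.
Qed.

Lemma upd_neq M (v : nat -> M) x a n : n <> x -> upd v x a n = v n.
Proof. by rewrite /upd => /eqP /negbTE ->. Qed.

Lemma fval_agree M (v w : nat -> M) phi :
  (forall x, ffree x phi -> v x = w x) -> fval v phi = fval w phi.
Proof.
have upd_agree (y : nat) p (v' w' : nat -> M) a :
    (forall x, ffree x (Sup y p) -> v' x = w' x) ->
    forall x, ffree x p -> upd v' y a x = upd w' y a x.
  move=> h x hx; rewrite /upd; case: (x =P y) => // hne.
  by apply: h; split => // e; apply: hne.
elim: phi v w => //=.
- by move=> t1 t2 v w h; congr st_dist; apply: tval_agree => x hx; apply: h; [left|right].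
- move=> r args v w h; congr relI; apply: funext => i; apply: tval_agree => x hx.
  by apply: h; exists i.
- by move=> p IHp q IHq v w h; rewrite (IHp v w) ?(IHq v w) // => x hx; apply: h; [right|left].
- by move=> c p IH v w h; rewrite (IH v w).
- move=> y p IH v w h.
  suff -> : (fun a => fval (upd v y a) p) = (fun a => fval (upd w y a) p) by [].
  by apply: funext => a; apply: IH; apply: upd_agree.
- move=> y p IH v w h.
  suff -> : (fun a => fval (upd v y a) p) = (fun a => fval (upd w y a) p) by [].
  by apply: funext => a; apply: IH; apply: upd_agree.
Qed.

Lemma fval_sentence M (v w : nat -> M) phi : sentence phi -> fval v phi = fval w phi.
Proof. by move=> hs; apply: fval_agree => x /hs. Qed.

Definition agree_off M (ys : seq nat) (v w : nat -> M) :=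
  forall n, n \notin ys -> v n = w n.

Lemma le_fval_Sups M ys p (v w : nat -> M) :
  agree_off ys v w -> fval w p <= fval v (Sups ys p).
Proof.
elim: ys v w => [|y ys IH] v w h /=.
  by have -> : w = v by apply: funext => n; rewrite h.
apply: le_trans (le_fval_Sup v y (Sups ys p) (w y)).
apply: IH => n hn; rewrite /upd; case: (n =P y) => [->//|hne].
by apply: h; rewrite in_cons negb_or hn andbT; apply/eqP.
Qed.

Lemma fval_Sups_adherent M ys p (v : nat -> M) e : 0 < e ->
  exists w, agree_off ys v w /\ fval v (Sups ys p) - e < fval w p.
Proof.
elim: ys v e => [|y ys IH] v e he; first by exists v; split => //=; lra.
have he2 : 0 < e / 2 by rewrite divr_gt0.
have [a ha] := fval_Sup_adherent v y (Sups ys p) he2.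
have [w [hw1 hw2]] := IH (upd v y a) _ he2.
exists w; split; last by rewrite [foldr _ _ _]/=; lra.
move=> n; rewrite in_cons negb_or => /andP[/eqP hny hn].
by rewrite -hw1 // upd_neq.
Qed.

Lemma fval_Sups_le M ys p (v : nat -> M) B :
  (forall w, agree_off ys v w -> fval w p <= B) -> fval v (Sups ys p) <= B.
Proof.
move=> h; apply/ler_addgt0Pr => e he.
have [w [hw1 hw2]] := fval_Sups_adherent ys p v he.
by have := h w hw1; lra.
Qed.

Lemma fval_InfsE M xs p (v : nat -> M) :
  fval v (Infs xs p) = - fval v (Sups xs (Scale (-1) p)).
Proof.
elim: xs v => [|x xs IH] v /=; first lra.
rewrite inf_rangeE.
suff -> : (fun a => -1 * fval (upd v x a) (Infs xs p)) =
  (fun a => fval (upd v x a) (Sups xs (Scale (-1) p))) by [].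
by apply: funext => a; rewrite IH; lra.
Qed.

Lemma fval_Infs_le M xs p (v w : nat -> M) :
  agree_off xs v w -> fval v (Infs xs p) <= fval w p.
Proof. by move=> h; rewrite fval_InfsE; have := le_fval_Sups (Scale (-1) p) h => /=; lra. Qed.

Lemma le_fval_Infs M xs p (v : nat -> M) B :
  (forall w, agree_off xs v w -> B <= fval w p) -> B <= fval v (Infs xs p).
Proof.
move=> h; rewrite fval_InfsE.
suff : fval v (Sups xs (Scale (-1) p)) <= - B by lra.
by apply: fval_Sups_le => w hw /=; have := h w hw; lra.
Qed.

Definition elementary M N (e : M -> N) :=
  forall phi (v : nat -> M), fval (e \o v) phi = fval v phi.

Lemma embedding_comp M N K (f : M -> N) (g : N -> K) :
  embedding f -> embedding g -> embedding (g \o f).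
Proof.
case=> hf1 hf2 hf3 [hg1 hg2 hg3]; split => [x y|fs a|r a] /=.
- by rewrite hg1 hf1.
- by rewrite hf2 hg2.
- by rewrite hg3 hf3.
Qed.

Lemma embedding_inj M N (f : M -> N) : embedding f -> injective f.
Proof. by case=> h _ _ x y e; apply: dist_sep; rewrite -h e dist_refl. Qed.

Lemma tval_comp_emb M N (e : M -> N) (v : nat -> M) t : embedding e ->
  tval (e \o v) t = e (tval v t).
Proof.
case=> _ hf _; elim: t => [n|f args IH] //=.
by rewrite hf; congr funI; apply: funext => i; rewrite IH.
Qed.

Lemma fval_comp_emb M N (e : M -> N) (v : nat -> M) phi : embedding e -> qfree phi ->
  fval (e \o v) phi = fval v phi.
Proof.
move=> he; have [hd _ hr] := he; elim: phi => //=.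
- by move=> t1 t2 _; rewrite !tval_comp_emb.
- by move=> r args _; rewrite -hr; congr relI; apply: funext => i; exact: tval_comp_emb.
- by move=> p IHp q IHq [hp hq]; rewrite IHp ?IHq.
- by move=> c p IH hp; rewrite IH.
Qed.

Lemma fval_Sups_emb_le M N (e : M -> N) (v : nat -> M) phi ys :
  embedding e -> qfree phi -> fval v (Sups ys phi) <= fval (e \o v) (Sups ys phi).
Proof.
move=> he hq; apply: fval_Sups_le => w hw.
by rewrite -(fval_comp_emb w he hq); apply: le_fval_Sups => n hn /=; rewrite hw.
Qed.

End Semantics.

Section Syntax.
Variables (R : realType) (L : Lang R).
Implicit Types (M K : Struc L) (t : term L) (phi p q : formula L).

Fixpoint tfv t : seq nat :=
  match t with
  | Var n => [:: n]
  | App f args => flatten [seq tfv (args i) | i <- enum 'I_(farity f)]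
  end.

Fixpoint fv phi : seq nat :=
  match phi with
  | One => [::]
  | Dist t1 t2 => tfv t1 ++ tfv t2
  | Rel r args => flatten [seq tfv (args i) | i <- enum 'I_(rarity r)]
  | Add p q => fv p ++ fv q
  | Scale _ p => fv p
  | Sup y p | Inf y p => [seq n <- fv p | n != y]
  end.

Lemma mem_tfv x t : tfree x t -> x \in tfv t.
Proof.
elim: t => [n|f args IH] /=; first by move=> ->; rewrite mem_seq1.
case=> i hi; apply/flattenP; exists (tfv (args i)); last exact: IH.
by apply: map_f; rewrite mem_enum.
Qed.

Lemma mem_fv x phi : ffree x phi -> x \in fv phi.
Proof.
elim: phi => //=.
- by move=> t1 t2 [h|h]; rewrite mem_cat (mem_tfv h) ?orbT.
- move=> r args [i hi]; apply/flattenP; exists (tfv (args i)); last exact: mem_tfv.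
  by apply: map_f; rewrite mem_enum.
- by move=> p IHp q IHq [h|h]; rewrite mem_cat ?(IHp h) ?(IHq h) ?orbT.
- by move=> y p IH [hy h]; rewrite mem_filter (IH h) andbT; apply/eqP => e; apply: hy.
- by move=> y p IH [hy h]; rewrite mem_filter (IH h) andbT; apply/eqP => e; apply: hy.
Qed.

Fixpoint trename (s : nat -> nat) t : term L :=
  match t with
  | Var n => Var L (s n)
  | App f args => App (fun i => trename s (args i))
  end.

Fixpoint frename (s : nat -> nat) phi : formula L :=
  match phi with
  | One => One L
  | Dist t1 t2 => Dist (trename s t1) (trename s t2)
  | Rel r args => Rel (fun i => trename s (args i))
  | Add p q => Add (frename s p) (frename s q)
  | Scale c p => Scale c (frename s p)
  | Sup y p => Sup (s y) (frename s p)
  | Inf y p => Inf (s y) (frename s p)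
  end.

Lemma tval_rename M (v : nat -> M) s t : tval v (trename s t) = tval (v \o s) t.
Proof. by elim: t => [n|f args IH] //=; congr funI; apply: funext => i; exact: IH. Qed.

Lemma fval_rename M (v : nat -> M) s phi :
  qfree phi -> fval v (frename s phi) = fval (v \o s) phi.
Proof.
elim: phi => //=.
- by move=> t1 t2 _; rewrite !tval_rename.
- by move=> r args _; congr relI; apply: funext => i; rewrite tval_rename.
- by move=> p IHp q IHq [hp hq]; rewrite IHp ?IHq.
- by move=> c p IH hp; rewrite IH.
Qed.

Lemma fval_rename_agree M (v w : nat -> M) s phi : qfree phi ->
  (forall k, ffree k phi -> v (s k) = w k) -> fval v (frename s phi) = fval w phi.
Proof. by move=> hq h; rewrite fval_rename //; apply: fval_agree. Qed.

Lemma qfree_rename s phi : qfree phi -> qfree (frename s phi).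
Proof. by elim: phi => //= p IHp q IHq [hp hq]; split; auto. Qed.

Lemma tfree_rename x s t : tfree x (trename s t) -> exists2 k, tfree k t & x = s k.
Proof.
elim: t => [n|f args IH] /=; first by move=> <-; exists n.
by case=> i /IH [k hk ->]; exists k => //; exists i.
Qed.

Lemma ffree_rename x s phi :
  qfree phi -> ffree x (frename s phi) -> exists2 k, ffree k phi & x = s k.
Proof.
elim: phi => //=.
- move=> t1 t2 _ [/tfree_rename [k hk ->]|/tfree_rename [k hk ->]];
    exists k => //; by [left|right].
- by move=> r args _ [i /tfree_rename [k hk ->]]; exists k => //; exists i.
- move=> p IHp q IHq [hp hq] [/(IHp hp) [k hk ->]|/(IHq hq) [k hk ->]];
    exists k => //; by [left|right].
Qed.

Fixpoint sumf (f : nat -> formula L) (n : nat) : formula L :=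
  if n is n'.+1 then Add (sumf f n') (f n') else zero_f L.

Lemma fval_sumf M (v : nat -> M) f n :
  fval v (sumf f n) = \sum_(l < n) fval v (f l).
Proof.
elim: n => [|n IH] /=; first by rewrite big_ord0 mul0r.
by rewrite big_ord_recr /= IH.
Qed.

Lemma qfree_sumf f n : (forall l, (l < n)%N -> qfree (f l)) -> qfree (sumf f n).
Proof.
elim: n => [|n IH] h //=.
by split; [apply: IH => l hl; apply: h; exact: ltnW | exact: h].
Qed.

Lemma ffree_sumf x f n : ffree x (sumf f n) -> exists2 l, (l < n)%N & ffree x (f l).
Proof.
elim: n => [|n IH] //= [/IH [l hl h]|h]; last by exists n.
by exists l => //; exact: ltnW.
Qed.

Lemma ffree_Sups x p ys : ffree x (Sups ys p) -> x \notin ys /\ ffree x p.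
Proof.
elim: ys => [|y ys IH] //= [hy /IH [h1 h2]]; split => //.
by rewrite in_cons negb_or h1 andbT; apply/eqP => e; apply: hy.
Qed.

Lemma ffree_Infs x p xs : ffree x (Infs xs p) -> x \notin xs /\ ffree x p.
Proof.
elim: xs => [|y xs IH] //= [hy /IH [h1 h2]]; split => //.
by rewrite in_cons negb_or h1 andbT; apply/eqP => e; apply: hy.
Qed.

End Syntax.

(** * Convex combinations of structures *)

(* Since formulas are affine, their values in [mix] are the same convex combinations of
   their values in [K1] and [K2] (fval_mix): this is what makes the sets of values realized
   in models convex. *)
Section Mix.
Variables (R : realType) (L : Lang R) (K1 K2 : Struc L) (t : R).
Hypotheses (t_gt0 : 0 < t) (t_lt1 : t < 1).

Let t_ge0 : 0 <= t. Proof. exact: ltW. Qed.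
Let t1_ge0 : 0 <= 1 - t. Proof. by rewrite subr_ge0 ltW. Qed.

Lemma mix_le a1 a2 b1 b2 : a1 <= b1 -> a2 <= b2 ->
  t * a1 + (1 - t) * a2 <= t * b1 + (1 - t) * b2.
Proof. by move=> h1 h2; apply: lerD; apply: ler_wpM2l. Qed.

Definition mix_dist (x y : K1 * K2) :=
  t * st_dist x.1 y.1 + (1 - t) * st_dist x.2 y.2.

Lemma mix_inh : inhabited (K1 * K2).
Proof. by case: (st_inh K1) => a; case: (st_inh K2) => b; constructor; exact: (a, b). Qed.

Lemma mix_dist_refl x : mix_dist x x = 0.
Proof. by rewrite /mix_dist !dist_refl !mulr0 addr0. Qed.

Lemma mix_dist_sep x y : mix_dist x y = 0 -> x = y.
Proof.
rewrite /mix_dist => h.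
have p1 : 0 <= t * st_dist x.1 y.1 by rewrite mulr_ge0 ?dist_ge0.
have p2 : 0 <= (1 - t) * st_dist x.2 y.2 by rewrite mulr_ge0 ?dist_ge0.
have /dist_sep e1 : st_dist x.1 y.1 = 0.
  have /eqP : t * st_dist x.1 y.1 = 0 by lra.
  by rewrite mulf_eq0 gt_eqF //= => /eqP.
have /dist_sep e2 : st_dist x.2 y.2 = 0.
  have /eqP : (1 - t) * st_dist x.2 y.2 = 0 by lra.
  by rewrite mulf_eq0 gt_eqF ?subr_gt0 //= => /eqP.
by case: x y e1 e2 {h p1 p2} => a b [c d] /= -> ->.
Qed.

Lemma mix_dist_sym x y : mix_dist x y = mix_dist y x.
Proof. by rewrite /mix_dist dist_sym (dist_sym x.2). Qed.

Lemma mix_dist_tri x y z : mix_dist x z <= mix_dist x y + mix_dist y z.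
Proof.
have := mix_le (dist_tri x.1 y.1 z.1) (dist_tri x.2 y.2 z.2).
by rewrite /mix_dist; lra.
Qed.

Lemma mix_dist_le1 x y : mix_dist x y <= 1.
Proof. by have := mix_le (dist_le1 x.1 y.1) (dist_le1 x.2 y.2); rewrite /mix_dist; lra. Qed.

Definition mix_funI (f : Fsym L) (a : 'I_(farity f) -> K1 * K2) : K1 * K2 :=
  (funI (fun i => (a i).1), funI (fun i => (a i).2)).

Definition mix_relI (r : Rsym L) (a : 'I_(rarity r) -> K1 * K2) : R :=
  t * relI (fun i => (a i).1) + (1 - t) * relI (fun i => (a i).2).

Lemma sum_mix_dist n (a b : 'I_n -> K1 * K2) :
  \sum_(i < n) mix_dist (a i) (b i) =
  t * \sum_(i < n) st_dist (a i).1 (b i).1 + (1 - t) * \sum_(i < n) st_dist (a i).2 (b i).2.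
Proof. by rewrite /mix_dist big_split /= !mulr_sumr. Qed.

Lemma mix_funI_lip f a b :
  mix_dist (mix_funI a) (mix_funI b) <= fLip f * \sum_(i < farity f) mix_dist (a i) (b i).
Proof.
rewrite sum_mix_dist.
have := mix_le (funI_lip (fun i => (a i).1) (fun i => (b i).1))
               (funI_lip (fun i => (a i).2) (fun i => (b i).2)).
by rewrite /mix_dist /=; lra.
Qed.

Lemma mix_relI_lip r a b :
  `|mix_relI a - mix_relI b| <= rLip r * \sum_(i < rarity r) mix_dist (a i) (b i).
Proof.
rewrite sum_mix_dist /mix_relI.
have h1 := ler_wpM2l t_ge0 (relI_lip (fun i => (a i).1) (fun i => (b i).1)).
have h2 := ler_wpM2l t1_ge0 (relI_lip (fun i => (a i).2) (fun i => (b i).2)).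
set x1 := relI (fun i => (a i).1) in h1 *; set y1 := relI (fun i => (b i).1) in h1 *.
set x2 := relI (fun i => (a i).2) in h2 *; set y2 := relI (fun i => (b i).2) in h2 *.
have -> : t * x1 + (1 - t) * x2 - (t * y1 + (1 - t) * y2) =
          t * (x1 - y1) + (1 - t) * (x2 - y2) by ring.
apply: le_trans (ler_normD _ _) _.
by rewrite !normrM (ger0_norm t_ge0) (ger0_norm t1_ge0); lra.
Qed.

Definition mix : Struc L := {|
  carrier := K1 * K2; st_dist := mix_dist; st_inh := mix_inh;
  dist_refl := mix_dist_refl; dist_sep := mix_dist_sep; dist_sym := mix_dist_sym;
  dist_tri := mix_dist_tri; dist_le1 := mix_dist_le1; funI := mix_funI; relI := mix_relI;
  funI_lip := mix_funI_lip; relI_lip := mix_relI_lip |}.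

Lemma tval_mix (v : nat -> mix) tm :
  tval v tm = (tval (fun n => (v n).1) tm, tval (fun n => (v n).2) tm).
Proof.
elim: tm => [n|f args IH] /=; first by case: (v n).
by rewrite /mix_funI /=; congr pair; congr funI; apply: funext => i; rewrite IH.
Qed.

Lemma fval_mix_Sup p x :
  (forall v : nat -> mix,
    fval v p = t * fval (fun n => (v n).1) p + (1 - t) * fval (fun n => (v n).2) p) ->
  forall v : nat -> mix,
    fval v (Sup x p) =
    t * fval (fun n => (v n).1) (Sup x p) + (1 - t) * fval (fun n => (v n).2) (Sup x p).
Proof.
have updE (v : nat -> mix) (a : mix) :
    (fun n => (upd v x a n).1, fun n => (upd v x a n).2) =
    (upd (fun n => (v n).1) x a.1, upd (fun n => (v n).2) x a.2).
  by congr pair; apply: funext => n; rewrite /upd; case: (n == x).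
move=> IH v; rewrite [fval v _]/=; apply: sup_rangeE => [a|e he].
  rewrite IH; case: (updE v a) => -> ->.
  exact: mix_le (le_fval_Sup _ _ _ _) (le_fval_Sup _ _ _ _).
have [b1 hb1] := fval_Sup_adherent (fun n => (v n).1) x p he.
have [b2 hb2] := fval_Sup_adherent (fun n => (v n).2) x p he.
exists ((b1, b2) : mix); rewrite IH; case: (updE v (b1, b2)) => -> ->.
set S1 := fval _ (Sup x p) in hb1 *; set S2 := fval _ (Sup x p) in hb2 *.
set f1 := fval _ p in hb1 *; set f2 := fval _ p in hb2 *.
have a1 : t * (S1 - e) < t * f1 by rewrite ltr_pM2l.
have a2 : (1 - t) * (S2 - e) < (1 - t) * f2 by rewrite ltr_pM2l // subr_gt0.
lra.
Qed.

Lemma fval_mix p (v : nat -> mix) :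
  fval v p = t * fval (fun n => (v n).1) p + (1 - t) * fval (fun n => (v n).2) p.
Proof.
elim: p v.
- by move=> v /=; ring.
- by move=> t1 t2 v /=; rewrite !tval_mix.
- move=> r args v /=; rewrite /mix_relI; congr (_ + _); congr (_ * relI _);
    by apply: funext => i; rewrite tval_mix.
- by move=> p IHp q IHq v /=; rewrite IHp IHq; ring.
- by move=> c p IH v /=; rewrite IH; ring.
- by move=> x p IH; apply: fval_mix_Sup.
- move=> x p IH v; rewrite !fval_InfE fval_mix_Sup; first ring.
  by move=> w /=; rewrite IH; ring.
Qed.

Lemma fval_mix_pair X (h1 : X -> K1) (h2 : X -> K2) (u : nat -> X) p :
  fval ((fun x => (h1 x, h2 x) : mix) \o u) p = t * fval (h1 \o u) p + (1 - t) * fval (h2 \o u) p.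
Proof. exact: fval_mix. Qed.

Lemma models_mix (T : theory L) : models K1 T -> models K2 T -> models mix T.
Proof. by move=> h1 h2 c hc v; rewrite !fval_mix; apply: mix_le; [apply: h1|apply: h2]. Qed.

End Mix.

(** * Ultraproducts *)

Section Quotient.
Variables (X : Type) (x0 : X) (eqv : X -> X -> Prop).
Hypotheses (eqv_refl : forall x, eqv x x)
  (eqv_sym : forall x y, eqv x y -> eqv y x)
  (eqv_trans : forall x y z, eqv x y -> eqv y z -> eqv x z).

Definition canon (x : X) : X := @xget {classic X} x0 [set y | eqv x y].

Lemma canon_eqv x : eqv x (canon x).
Proof. exact: (@xgetI {classic X} x0 [set y | eqv x y] x). Qed.

Lemma canon_eq x y : eqv x y -> canon x = canon y.
Proof.
move=> h; rewrite /canon; congr (@xget {classic X} x0 _); rewrite eqEsubset; split => z /=.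
  exact: eqv_trans (eqv_sym h).
exact: eqv_trans h.
Qed.

Definition quot := {x : X | canon x = x}.

Definition qpi (x : X) : quot := exist _ (canon x) (canon_eq (eqv_sym (canon_eqv x))).

Lemma qpi_val (a : quot) : qpi (sval a) = a.
Proof. by case: a => a ha; apply: eq_exist; rewrite /= ha. Qed.

Lemma qpi_eqv x : eqv x (sval (qpi x)).
Proof. exact: canon_eqv. Qed.

Lemma eqv_qpi x y : eqv x y -> qpi x = qpi y.
Proof. by move=> h; apply: eq_exist; apply: canon_eq. Qed.

Lemma eqv_sval (a b : quot) : eqv (sval a) (sval b) -> a = b.
Proof. by move=> h; rewrite -(qpi_val a) -(qpi_val b); apply: eqv_qpi. Qed.

End Quotient.

Lemma directed_ultra (I : Type) (le : I -> I -> Prop) :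
  inhabited I -> (forall i j k, le i j -> le j k -> le i k) ->
  (forall i j, exists k, le i k /\ le j k) ->
  exists U : set_system I, UltraFilter U /\ forall i0, U [set i | le i0 i].
Proof.
move=> [i1] htr hub.
pose F := fun A : set I => exists i0, forall i, le i0 i -> A i.
have FF : ProperFilter F.
  apply: Build_ProperFilter_ex.
    by move=> P [i0 h]; have [k [hk _]] := hub i0 i0; exists k; exact: h.
  split; first by exists i1.
  - move=> A B [i hi] [j hj]; have [k [hk1 hk2]] := hub i j.
    by exists k => l hl; split; [apply: hi; apply: htr hk1 hl|apply: hj; apply: htr hk2 hl].
  - by move=> A B hAB [i hi]; exists i => l hl; apply: hAB; apply: hi.
have [G [GU FG]] := ultraFilterLemma FF.
by exists G; split => // i0; apply: FG; exists i0.
Qed.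

Lemma eq_of_norm_sub_le (R : realType) (x y : R) :
  (forall e, 0 < e -> `|x - y| <= e) -> x = y.
Proof.
move=> h; apply/eqP; rewrite -subr_eq0 -normr_le0; apply/ler_addgt0Pr => e he.
by rewrite add0r; exact: h.
Qed.

Section UltraLimit.
Variables (R : realType) (I : Type) (U : set_system I).
Context {hU : UltraFilter U}.
Implicit Types (a b c : I -> R).

(* Junk unless [a] is [ubounded]. *)
Definition ulim a : R := inf [set s | U [set i | a i <= s]].
Definition ubounded a := exists B, U [set i | `|a i| <= B].

Lemma ulim_near a : ubounded a -> forall e, 0 < e -> U [set i | `|a i - ulim a| <= e].
Proof.
move=> [B hB] e he; set E := [set s | U [set i | a i <= s]].
have hE : E !=set0 by exists B; apply: filterS hB => i /=; rewrite ler_norml => /andP[].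
have hlb : lbound E (- B).
  move=> s hs; have [i /= [h1 h2]] := filter_ex (filterI hs hB).
  by move: h2; rewrite ler_norml => /andP[h3 _]; apply: le_trans h3 h1.
have h1 : U [set i | a i <= ulim a + e].
  have [s hs hlt] := inf_adherent he (conj hE (ex_intro _ (- B) hlb)).
  by apply: filterS hs => i /= hi; apply: le_trans hi (ltW hlt).
have h2 : U [set i | ulim a - e <= a i].
  case: (in_ultra_setVsetC [set i | ulim a - e <= a i] hU) => // hn.
  have hE' : E (ulim a - e) by apply: filterS hn => i /= /negP; rewrite -ltNge => /ltW.
  by have := ge_inf (ex_intro _ (- B) hlb) hE'; rewrite /ulim -/E; lra.
by apply: filterS (filterI h1 h2) => i /= [hi1 hi2]; rewrite ler_norml; apply/andP; split; lra.
Qed.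

Lemma ulim_unique a r : (forall e, 0 < e -> U [set i | `|a i - r| <= e]) -> ulim a = r.
Proof.
move=> h.
have hb : ubounded a.
  exists (`|r| + 1); apply: filterS (h 1 ltr01) => i /= hi.
  by have := ler_normD (a i - r) r; rewrite subrK; lra.
apply: eq_of_norm_sub_le => e he; have he2 : 0 < e / 2 by rewrite divr_gt0.
have [i /= [h1 h2]] := filter_ex (filterI (ulim_near hb he2) (h _ he2)).
have := ler_normD (ulim a - a i) (a i - r).
by rewrite distrC in h1; rewrite -addrA (addrA (- a i)) addNr add0r; lra.
Qed.

Lemma ubounded_cst r : ubounded (fun _ => r).
Proof. by exists `|r|; apply: filterE => i /=. Qed.

Lemma ulim_cst r : ulim (fun _ => r) = r.
Proof. by apply: ulim_unique => e he; apply: filterE => i /=; rewrite subrr normr0 ltW. Qed.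

Lemma ubounded_D a b : ubounded a -> ubounded b -> ubounded (fun i => a i + b i).
Proof.
move=> [A ha] [B hb]; exists (A + B); apply: filterS (filterI ha hb) => i /= [h1 h2].
by apply: le_trans (ler_normD _ _) _; apply: lerD.
Qed.

Lemma ubounded_Z r a : ubounded a -> ubounded (fun i => r * a i).
Proof.
move=> [A ha]; exists (`|r| * A); apply: filterS ha => i /= h.
by rewrite normrM ler_wpM2l.
Qed.

Lemma ubounded_N a : ubounded a -> ubounded (fun i => - a i).
Proof. by case=> B hB; exists B; apply: filterS hB => i /=; rewrite normrN. Qed.

Lemma ubounded_sum n (a : 'I_n -> I -> R) : (forall k, ubounded (a k)) ->
  ubounded (fun i => \sum_(k < n) a k i).
Proof.
elim: n a => [|n IH] a h; first by exists 0; apply: filterE => i /=; rewrite big_ord0 normr0.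
have [B hB] := ubounded_D (IH (fun k => a (widen_ord (leqnSn n) k)) (fun k => h _)) (h ord_max).
by exists B; apply: filterS hB => i /= hi; rewrite big_ord_recr; exact: hi.
Qed.

Lemma ulimD a b : ubounded a -> ubounded b -> ulim (fun i => a i + b i) = ulim a + ulim b.
Proof.
move=> ha hb; apply: ulim_unique => e he; have he2 : 0 < e / 2 by rewrite divr_gt0.
apply: filterS (filterI (ulim_near ha he2) (ulim_near hb he2)) => i /= [h1 h2].
have := ler_normD (a i - ulim a) (b i - ulim b).
have -> : a i - ulim a + (b i - ulim b) = a i + b i - (ulim a + ulim b) by ring.
lra.
Qed.

Lemma ulimZ r a : ubounded a -> ulim (fun i => r * a i) = r * ulim a.
Proof.
move=> ha; apply: ulim_unique => e he.
have he2 : 0 < e / (`|r| + 1) by rewrite divr_gt0 // ltr_pwDr.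
apply: filterS (ulim_near ha he2) => i /= h; rewrite -mulrBr normrM.
apply: le_trans (ler_wpM2l (normr_ge0 r) h) _.
by rewrite mulrA ler_pdivrMr ?ltr_pwDr //; nra.
Qed.

Lemma ulimN a : ubounded a -> ulim (fun i => - a i) = - ulim a.
Proof.
move=> ha; rewrite -mulN1r -ulimZ //; congr ulim; apply: funext => i; by rewrite mulN1r.
Qed.

Lemma ulim_sum n (a : 'I_n -> I -> R) : (forall k, ubounded (a k)) ->
  ulim (fun i => \sum_(k < n) a k i) = \sum_(k < n) ulim (a k).
Proof.
elim: n a => [|n IH] a h.
  rewrite big_ord0 -[RHS](ulim_cst 0); congr ulim; apply: funext => i; exact: big_ord0.
rewrite big_ord_recr /= -IH // -ulimD //; last exact: ubounded_sum.
by congr ulim; apply: funext => i /=; rewrite big_ord_recr.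
Qed.

Lemma ler_ulim a b : ubounded a -> ubounded b -> U [set i | a i <= b i] -> ulim a <= ulim b.
Proof.
move=> ha hb hab; rewrite leNgt; apply/negP => hlt.
set e := (ulim a - ulim b) / 3; have he : 0 < e by rewrite divr_gt0 // subr_gt0.
have [i /= [[h1 h2] h3]] := filter_ex (filterI (filterI (ulim_near ha he) (ulim_near hb he)) hab).
move: h1 h2; rewrite !ler_norml => /andP[h1 _] /andP[_ h2].
have : ulim a - ulim b = 3 * e by rewrite /e; field.
lra.
Qed.

Lemma ulim_le a r : ubounded a -> U [set i | a i <= r] -> ulim a <= r.
Proof. by move=> ha h; rewrite -(ulim_cst r); apply: ler_ulim => //; exact: ubounded_cst. Qed.

Lemma ulim_ge a r : ubounded a -> U [set i | r <= a i] -> r <= ulim a.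
Proof. by move=> ha h; rewrite -(ulim_cst r); apply: ler_ulim => //; exact: ubounded_cst. Qed.

Lemma normr_ulimB_le a b c : ubounded a -> ubounded b -> ubounded c ->
  U [set i | `|a i - b i| <= c i] -> `|ulim a - ulim b| <= ulim c.
Proof.
move=> ha hb hc h; have hb' := ubounded_N hb.
rewrite -ulimN // -ulimD // ler_norml; apply/andP; split.
  rewrite -ulimN //; apply: ler_ulim => //; first exact: ubounded_N.
    exact: ubounded_D.
  by apply: filterS h => i /=; rewrite ler_norml => /andP[].
apply: ler_ulim => //; first exact: ubounded_D.
by apply: filterS h => i /=; rewrite ler_norml => /andP[].
Qed.

End UltraLimit.

Section Ultraproduct.
Variables (R : realType) (L : Lang R) (I : Type) (U : set_system I).
Context {hU : UltraFilter U}.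
Variable K : I -> Struc L.
Hypothesis relI_ubounded : forall r : Rsym L,
  exists B, U [set i | forall a : 'I_(rarity r) -> K i, `|relI a| <= B].

Local Notation ulim := (ulim U).
Local Notation ubounded := (ubounded U).
Implicit Types (x y z : forall i, K i) (phi p : formula L).

Definition udist x y := ulim (fun i => st_dist (x i) (y i)).

Lemma ubounded_dist x y : ubounded (fun i => st_dist (x i) (y i)).
Proof. by exists 1; apply: filterE => i /=; rewrite ger0_norm ?dist_ge0 ?dist_le1. Qed.

Lemma ubounded_sum_dist n (x y : 'I_n -> forall i, K i) :
  ubounded (fun i => \sum_(k < n) st_dist (x k i) (y k i)).
Proof. by apply: ubounded_sum => k; exact: ubounded_dist. Qed.

Lemma udist_ge0 x y : 0 <= udist x y.
Proof. by apply: ulim_ge; [exact: ubounded_dist|apply: filterE => i; exact: dist_ge0]. Qed.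

Lemma udist_le1 x y : udist x y <= 1.
Proof. by apply: ulim_le; [exact: ubounded_dist|apply: filterE => i; exact: dist_le1]. Qed.

Lemma udist_refl x : udist x x = 0.
Proof.
rewrite /udist -[RHS](ulim_cst (U := U) 0); congr ulim; apply: funext => i; exact: dist_refl.
Qed.

Lemma udist_sym x y : udist x y = udist y x.
Proof. by rewrite /udist; congr ulim; apply: funext => i; rewrite dist_sym. Qed.

Lemma udist_tri x y z : udist x z <= udist x y + udist y z.
Proof.
rewrite /udist -ulimD; try exact: ubounded_dist.
apply: ler_ulim; [exact: ubounded_dist|apply: ubounded_D; exact: ubounded_dist|].
by apply: filterE => i; exact: dist_tri.
Qed.

Definition ueqv x y := udist x y = 0.

Lemma ueqv_refl x : ueqv x x. Proof. exact: udist_refl. Qed.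
Lemma ueqv_sym x y : ueqv x y -> ueqv y x. Proof. by rewrite /ueqv udist_sym. Qed.
Lemma ueqv_trans x y z : ueqv x y -> ueqv y z -> ueqv x z.
Proof.
rewrite /ueqv => h1 h2; apply/le_anti; rewrite udist_ge0 andbT.
by have := udist_tri x y z; rewrite h1 h2 addr0.
Qed.

Lemma udist_congr x x' y y' : ueqv x x' -> ueqv y y' -> udist x y = udist x' y'.
Proof.
rewrite /ueqv => h1 h2; apply/le_anti/andP; split.
  by have := udist_tri x x' y; have := udist_tri x' y' y; rewrite udist_sym in h2; lra.
by have := udist_tri x' x y'; have := udist_tri x y y'; rewrite udist_sym in h1; lra.
Qed.

Definition uquot := quot (fun i => pt (K i)) ueqv.
Definition upi x : uquot := qpi (fun i => pt (K i)) ueqv_refl ueqv_sym ueqv_trans x.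

Lemma upi_eqv x : ueqv x (sval (upi x)).
Proof. exact: (qpi_eqv _ ueqv_refl). Qed.

Lemma eqv_upi x y : ueqv x y -> upi x = upi y.
Proof. exact: (eqv_qpi _ ueqv_refl). Qed.

Definition uq_dist (a b : uquot) := udist (sval a) (sval b).

Lemma uq_inh : inhabited uquot. Proof. by constructor; exact: upi (fun i => pt (K i)). Qed.
Lemma uq_dist_refl a : uq_dist a a = 0. Proof. exact: udist_refl. Qed.
Lemma uq_dist_sep a b : uq_dist a b = 0 -> a = b.
Proof. exact: (eqv_sval ueqv_refl ueqv_sym ueqv_trans). Qed.
Lemma uq_dist_sym a b : uq_dist a b = uq_dist b a. Proof. exact: udist_sym. Qed.
Lemma uq_dist_tri a b c : uq_dist a c <= uq_dist a b + uq_dist b c. Proof. exact: udist_tri. Qed.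
Lemma uq_dist_le1 a b : uq_dist a b <= 1. Proof. exact: udist_le1. Qed.

Lemma udist_funI f (x y : 'I_(farity f) -> forall i, K i) :
  udist (fun i => funI (fun k => x k i)) (fun i => funI (fun k => y k i)) <=
  fLip f * \sum_(k < farity f) udist (x k) (y k).
Proof.
rewrite /udist -ulim_sum; last by move=> k; exact: ubounded_dist.
rewrite -ulimZ; last exact: ubounded_sum_dist.
apply: ler_ulim; [exact: ubounded_dist|apply: ubounded_Z; exact: ubounded_sum_dist|].
by apply: filterE => i; exact: funI_lip.
Qed.

Lemma ueqv_funI f (x y : 'I_(farity f) -> forall i, K i) : (forall k, ueqv (x k) (y k)) ->
  ueqv (fun i => funI (fun k => x k i)) (fun i => funI (fun k => y k i)).
Proof.
move=> h; apply/le_anti; rewrite udist_ge0 andbT.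
by apply: le_trans (udist_funI x y) _; rewrite big1 ?mulr0 // => k _; exact: h.
Qed.

Lemma ubounded_relI r (x : 'I_(rarity r) -> forall i, K i) :
  ubounded (fun i => relI (fun k => x k i)).
Proof. by have [B hB] := relI_ubounded r; exists B; apply: filterS hB => i; apply. Qed.

Lemma ulim_relI_lip r (x y : 'I_(rarity r) -> forall i, K i) :
  `|ulim (fun i => relI (fun k => x k i)) - ulim (fun i => relI (fun k => y k i))|
    <= rLip r * \sum_(k < rarity r) udist (x k) (y k).
Proof.
rewrite /udist -ulim_sum; last by move=> k; exact: ubounded_dist.
rewrite -ulimZ; last exact: ubounded_sum_dist.
apply: normr_ulimB_le; try exact: ubounded_relI.
  by apply: ubounded_Z; exact: ubounded_sum_dist.
by apply: filterE => i; exact: relI_lip.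
Qed.

Lemma ulim_relI_congr r (x y : 'I_(rarity r) -> forall i, K i) : (forall k, ueqv (x k) (y k)) ->
  ulim (fun i => relI (fun k => x k i)) = ulim (fun i => relI (fun k => y k i)).
Proof.
move=> h; apply: eq_of_norm_sub_le => e he; apply: le_trans (ulim_relI_lip x y) _.
by rewrite big1 ?mulr0 ?ltW // => k _; exact: h.
Qed.

Definition uq_funI (f : Fsym L) (a : 'I_(farity f) -> uquot) : uquot :=
  upi (fun i => funI (fun k => sval (a k) i)).

Definition uq_relI (r : Rsym L) (a : 'I_(rarity r) -> uquot) : R :=
  ulim (fun i => relI (fun k => sval (a k) i)).

Lemma uq_funI_lip f a b :
  uq_dist (uq_funI a) (uq_funI b) <= fLip f * \sum_(k < farity f) uq_dist (a k) (b k).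
Proof.
rewrite /uq_dist /uq_funI -(udist_congr (upi_eqv _) (upi_eqv _)).
exact: (udist_funI (fun k => sval (a k)) (fun k => sval (b k))).
Qed.

Lemma uq_relI_lip r a b :
  `|uq_relI a - uq_relI b| <= rLip r * \sum_(k < rarity r) uq_dist (a k) (b k).
Proof. exact: (ulim_relI_lip (fun k => sval (a k)) (fun k => sval (b k))). Qed.

Definition ultraproduct : Struc L := {|
  carrier := uquot; st_dist := uq_dist; st_inh := uq_inh;
  dist_refl := uq_dist_refl; dist_sep := uq_dist_sep; dist_sym := uq_dist_sym;
  dist_tri := uq_dist_tri; dist_le1 := uq_dist_le1; funI := uq_funI; relI := uq_relI;
  funI_lip := uq_funI_lip; relI_lip := uq_relI_lip |}.

Lemma tval_ultraproduct (v : nat -> ultraproduct) (w : forall i, nat -> K i) :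
  (forall n, ueqv (sval (v n)) (fun i => w i n)) ->
  forall t, ueqv (sval (tval v t)) (fun i => tval (w i) t).
Proof.
move=> hv; elim => [n|f args IH] /=; first exact: hv.
apply: ueqv_trans (ueqv_sym (upi_eqv _)) _.
exact: (ueqv_funI (x := fun k => sval (tval v (args k))) (y := fun k i => tval (w i) (args k))).
Qed.

Lemma fval_ubounded_uniform phi :
  exists B, U [set i | forall u : nat -> K i, `|fval u phi| <= B].
Proof.
elim: phi.
- by exists 1; apply: filterE => i u /=; rewrite normr1.
- by move=> t1 t2; exists 1; apply: filterE => i u /=; rewrite ger0_norm ?dist_ge0 ?dist_le1.
- by move=> r args; have [B hB] := relI_ubounded r; exists B; apply: filterS hB => i h u /=.
- move=> p [B1 h1] q [B2 h2]; exists (B1 + B2); apply: filterS (filterI h1 h2) => i [g1 g2] u /=.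
  by apply: le_trans (ler_normD _ _) _; apply: lerD.
- move=> c p [B h]; exists (`|c| * B); apply: filterS h => i g u /=.
  by rewrite normrM ler_wpM2l.
- move=> x p [B h]; exists B; apply: filterS h => i g u /=.
  exact: normr_sup_range_le (st_inh _) _.
- move=> x p [B h]; exists B; apply: filterS h => i g u /=; rewrite inf_rangeE normrN.
  by apply: normr_sup_range_le (st_inh _) _ => a; rewrite mulN1r normrN.
Qed.

Lemma ubounded_fval phi (w : forall i, nat -> K i) : ubounded (fun i => fval (w i) phi).
Proof. by have [B hB] := fval_ubounded_uniform phi; exists B; apply: filterS hB => i; apply. Qed.

Lemma sup_range_ultraproduct (F : forall i, K i -> R) (G : ultraproduct -> R) B :
  U [set i | forall b, `|F i b| <= B] ->
  (forall (a : ultraproduct) (b : forall i, K i),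
    ueqv (sval a) b -> G a = ulim (fun i => F i (b i))) ->
  sup (range G) = ulim (fun i => sup (range (F i))).
Proof.
move=> hB hG.
have hB1 : U [set i | forall b, F i b <= B].
  by apply: filterS hB => i h b; have := h b; rewrite ler_norml => /andP[].
have hs : ubounded (fun i => sup (range (F i))).
  by exists B; apply: filterS hB => i h; apply: normr_sup_range_le (st_inh _) h.
have hF (b : forall i, K i) : ubounded (fun i => F i (b i)).
  by exists B; apply: filterS hB => i; apply.
apply: sup_rangeE => [a|e he].
  rewrite (hG a (sval a)); last exact: ueqv_refl.
  by apply: ler_ulim => //; apply: filterS hB1 => i h; exact: le_sup_range h _.
have he2 : 0 < e / 2 by rewrite divr_gt0.
pose P i (y : K i) := sup (range (F i)) - e / 2 < F i y.
pose b i : K i := @xget {classic K i} (pt (K i)) (P i).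
have hb : U [set i | P i (b i)].
  apply: filterS hB1 => i /= h; apply: (@xgetPex {classic K i} (pt (K i)) (P i)).
  exact: sup_range_adherent (st_inh _) h _ he2.
exists (upi b); rewrite (hG _ b); last exact: ueqv_sym (upi_eqv _).
have : ulim (fun i => sup (range (F i)) + - (e / 2)) <= ulim (fun i => F i (b i)).
  apply: ler_ulim => //; first by apply: ubounded_D => //; exact: ubounded_cst.
  by apply: filterS hb => i /ltW.
by rewrite ulimD // ?ulim_cst; [lra|exact: ubounded_cst].
Qed.

Definition los_formula phi := forall (v : nat -> ultraproduct) (w : forall i, nat -> K i),
  (forall n, ueqv (sval (v n)) (fun i => w i n)) ->
  fval v phi = ulim (fun i => fval (w i) phi).

Lemma los_Sup p (x : nat) : los_formula p -> los_formula (Sup x p).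
Proof.
move=> IH v w hv; have [B hB] := fval_ubounded_uniform p.
apply: (sup_range_ultraproduct (F := fun i b => fval (upd (w i) x b) p) (B := B)).
  by apply: filterS hB => i h b; exact: h.
by move=> a b hab; apply: IH => n; rewrite /upd; case: (n == x).
Qed.

Lemma los_Scale p c : los_formula p -> los_formula (Scale c p).
Proof. by move=> IH v w hv /=; rewrite (IH v w hv) ulimZ //; exact: ubounded_fval. Qed.

Theorem los phi : los_formula phi.
Proof.
elim: phi.
- by move=> v w hv /=; rewrite ulim_cst.
- by move=> t1 t2 v w hv /=; apply: udist_congr; exact: tval_ultraproduct.
- move=> r args v w hv /=.
  apply: (ulim_relI_congr (x := fun k => sval (tval v (args k)))
    (y := fun k i => tval (w i) (args k))).
  by move=> k; exact: tval_ultraproduct.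
- by move=> p IHp q IHq v w hv /=; rewrite (IHp v w hv) (IHq v w hv) ulimD //; exact: ubounded_fval.
- by move=> c p IH; apply: los_Scale.
- by move=> x p IH; apply: los_Sup.
- move=> x p IH v w hv; rewrite fval_InfE (los_Sup x (los_Scale (-1) IH) hv) -ulimN //.
    by congr ulim; apply: funext => i; rewrite fval_InfE.
  exact: ubounded_fval.
Qed.

Lemma models_ultraproduct (T : theory L) : (forall i, models (K i) T) -> models ultraproduct T.
Proof.
move=> hK c hc v; have hv n : ueqv (sval (v n)) (fun i => sval (v n) i) by exact: ueqv_refl.
rewrite (los c.1 hv) (los c.2 hv); apply: ler_ulim; try exact: ubounded_fval.
by apply: filterE => i; exact: hK.
Qed.

Section UltraMap.
Variables (X : Type) (h : forall i, X -> K i).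

Definition umap (x : X) : ultraproduct := upi (fun i => h i x).

Lemma fval_umap (u : nat -> X) phi : fval (umap \o u) phi = ulim (fun i => fval (h i \o u) phi).
Proof. by apply: los => n; exact: ueqv_sym (upi_eqv _). Qed.

Lemma dist_umap (x y : X) : st_dist (umap x) (umap y) = ulim (fun i => st_dist (h i x) (h i y)).
Proof. by rewrite /= /uq_dist -(udist_congr (upi_eqv _) (upi_eqv _)). Qed.

Lemma funI_umap f (a : 'I_(farity f) -> X) :
  funI (umap \o a) = upi (fun i => funI (fun k => h i (a k))).
Proof.
apply: eqv_upi; apply: (ueqv_funI (x := fun k => sval (umap (a k))) (y := fun k i => h i (a k))).
by move=> k; exact: ueqv_sym (upi_eqv _).
Qed.

Lemma relI_umap r (a : 'I_(rarity r) -> X) :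
  relI (umap \o a) = ulim (fun i => relI (fun k => h i (a k))).
Proof.
apply: (ulim_relI_congr (x := fun k => sval (umap (a k))) (y := fun k i => h i (a k))).
by move=> k; exact: ueqv_sym (upi_eqv _).
Qed.

End UltraMap.
End Ultraproduct.

Definition ext_tuple (X : Type) n (a : 'I_n -> X) (d : X) (m : nat) : X :=
  if insub m is Some k then a k else d.

Lemma ext_tuple_ord X n (a : 'I_n -> X) d (k : 'I_n) : ext_tuple a d k = a k.
Proof. by rewrite /ext_tuple valK. Qed.

Lemma ext_tuple_out X n (a : 'I_n -> X) d m : (n <= m)%N -> ext_tuple a d m = d.
Proof. by move=> h; rewrite /ext_tuple insubF // ltnNge h. Qed.

Lemma comp_ext_tuple X Y n (g : X -> Y) (a : 'I_n -> X) d :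
  g \o ext_tuple a d = ext_tuple (g \o a) (g d).
Proof. by apply: funext => m; rewrite /ext_tuple /=; case: insub. Qed.

Section ExtTupleFormulas.
Variables (R : realType) (L : Lang R) (M : Struc L).

Lemma fval_ext_tuple_funI f (a : 'I_(farity f) -> M) d :
  fval (ext_tuple a d) (Dist (Var L (farity f)) (App (fun k : 'I_(farity f) => Var L k))) =
  st_dist d (funI a).
Proof.
rewrite /= ext_tuple_out //; congr (st_dist _ (funI _)).
by apply: funext => k; rewrite ext_tuple_ord.
Qed.

Lemma fval_ext_tuple_Rel r (a : 'I_(rarity r) -> M) d :
  fval (ext_tuple a d) (Rel (fun k : 'I_(rarity r) => Var L k)) = relI a.
Proof. by rewrite /=; congr relI; apply: funext => k; rewrite ext_tuple_ord. Qed.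

End ExtTupleFormulas.

Section UltraproductOfApproximations.
Variables (R : realType) (L : Lang R) (X : Struc L) (I : Type) (U : set_system I).
Context {hU : UltraFilter U}.
Variables (K : I -> Struc L) (h : forall i, X -> K i).
Hypothesis happrox : forall (p : formula L) (w : nat -> X), qfree p -> forall e, 0 < e ->
  U [set i | `|fval (h i \o w) p - fval w p| <= e].

Lemma approx_relI_ubounded r :
  exists B, U [set i | forall a : 'I_(rarity r) -> K i, `|relI a| <= B].
Proof.
exists (`|relI (fun _ : 'I_(rarity r) => pt X)| + 1 + rLip r * (rarity r)%:R).
have := @happrox (@Rel R L r (fun k => Var L k)) (fun _ => pt X) Logic.I 1 ltr01.
apply: filterS => i /= h1 a.
have := relI_norm_le (h i (pt X)) a.
set c := relI (fun _ : 'I_(rarity r) => pt X) in h1 *.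
set c' := relI (fun _ : 'I_(rarity r) => h i (pt X)) in h1 *.
by have := ler_normD (c' - c) c; rewrite subrK; lra.
Qed.

Lemma approx_ulimE (p : formula L) (w : nat -> X) :
  qfree p -> ulim U (fun i => fval (h i \o w) p) = fval w p.
Proof. by move=> hq; apply: ulim_unique => e he; exact: happrox. Qed.

Lemma ultraproduct_of_approx : exists (N : Struc L) (f : X -> N),
  [/\ embedding f,
      forall phi (u : nat -> X), fval (f \o u) phi = ulim U (fun i => fval (h i \o u) phi),
      forall phi (u : nat -> X), ubounded U (fun i => fval (h i \o u) phi) &
      forall T : theory L, (forall i, models (K i) T) -> models N T].
Proof.
exists (ultraproduct approx_relI_ubounded), (umap approx_relI_ubounded h).
have hb phi (u : nat -> X) : ubounded U (fun i => fval (h i \o u) phi).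
  exact: (ubounded_fval approx_relI_ubounded phi (fun i => h i \o u)).
split; [split|move=> phi u; exact: fval_umap|exact: hb|exact: models_ultraproduct].
- move=> x y; rewrite dist_umap.
  exact: (@approx_ulimE (Dist (Var L 0) (Var L 1)) (fun n => if n == 0%N then x else y) Logic.I).
- move=> f a; rewrite funI_umap; apply: eqv_upi; rewrite /ueqv /udist.
  rewrite -(dist_refl (funI a)) -(fval_ext_tuple_funI a (funI a)) -approx_ulimE //.
  by congr ulim; apply: funext => i; rewrite comp_ext_tuple fval_ext_tuple_funI.
- move=> r a; rewrite relI_umap -(fval_ext_tuple_Rel a (pt X)) -approx_ulimE //.
  by congr ulim; apply: funext => i; rewrite comp_ext_tuple fval_ext_tuple_Rel.
Qed.

End UltraproductOfApproximations.

(** * Minimax and finite approximation *)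

Section TwoFunctionMinimax.
Variables (R : realType) (S : Type) (P : S -> Prop) (X Y : S -> R).
Hypothesis convP : forall a b, P a -> P b -> forall t, 0 < t -> t < 1 ->
  exists2 c, P c & X c = t * X a + (1 - t) * X b /\ Y c = t * Y a + (1 - t) * Y b.
Hypothesis XY_pos : forall a, P a -> 0 < X a \/ 0 < Y a.

(* Otherwise the combination of [q] and [p] on which [X] vanishes would have [Y < 0]. *)
Lemma XY_cross_le p q : P p -> Y p < 0 -> P q -> X q < 0 -> Y p * X q <= Y q * X p.
Proof.
move=> hp hyp hq hxq; rewrite leNgt; apply/negP => hlt.
have hxp : 0 < X p by case: (XY_pos hp); lra.
set t := X p / (X p - X q); have hd : 0 < X p - X q by lra.
have ht0 : 0 < t by rewrite divr_gt0.
have ht1 : t < 1 by rewrite ltr_pdivrMr // mul1r; lra.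
have [c hc [hxc hyc]] := convP hq hp ht0 ht1.
have e1 : X c = 0 by rewrite hxc /t; field; lra.
have e2 : Y c * (X p - X q) = X p * Y q - X q * Y p by rewrite hyc /t; field; lra.
have : Y c * (X p - X q) < 0 by rewrite e2; lra.
by rewrite pmulr_llt0 //; case: (XY_pos hc); lra.
Qed.

Lemma XY_comb_nonneg :
  exists th, [/\ 0 <= th, th <= 1 & forall a, P a -> 0 <= th * X a + (1 - th) * Y a].
Proof.
have [[p0 [hp0 hyp0]]|hnb] := pselect (exists p, P p /\ Y p < 0); last first.
  exists 0; split => // a ha; rewrite mul0r add0r subr0 mul1r leNgt.
  by apply/negP => h; apply: hnb; exists a.
have [[q0 [hq0 hxq0]]|hnl] := pselect (exists q, P q /\ X q < 0); last first.
  exists 1; split => // a ha; rewrite subrr mul0r addr0 mul1r leNgt.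
  by apply/negP => h; apply: hnl; exists a.
have hX p : P p -> Y p < 0 -> 0 < X p by move=> hp hy; case: (XY_pos hp); lra.
have ratio_le p q : P p -> Y p < 0 -> P q -> X q < 0 -> - Y p / X p <= Y q / (- X q).
  move=> hp hyp hq hxq; have hxp := hX p hp hyp; have hk := XY_cross_le hp hyp hq hxq.
  by rewrite ler_pdivrMr // mulrAC ler_pdivlMr; lra.
pose E := [set r | exists p, [/\ P p, Y p < 0 & r = - Y p / X p]].
have hsup : has_sup E.
  split; first by exists (- Y p0 / X p0), p0.
  by exists (Y q0 / (- X q0)) => r [p [hp hyp ->]]; exact: ratio_le.
set s := sup E.
have hs0 : 0 <= s.
  apply: le_trans (sup_upper_bound hsup (ex_intro _ p0 (And3 hp0 hyp0 erefl))).
  by rewrite divr_ge0 //; [lra|exact/ltW/hX].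
exists (s / (1 + s)); split; first by rewrite divr_ge0 //; lra.
  by rewrite ler_pdivrMr; lra.
move=> a ha.
have -> : s / (1 + s) * X a + (1 - s / (1 + s)) * Y a = (s * X a + Y a) / (1 + s).
  by field; lra.
rewrite divr_ge0 //; last lra.
have [hya|hya] := ltrP (Y a) 0.
  have hxa := hX a ha hya.
  have := sup_upper_bound hsup (ex_intro _ a (And3 ha hya erefl)).
  by rewrite -/s ler_pdivrMr // => h; lra.
have [hxa|hxa] := ltrP (X a) 0; last first.
  have : 0 <= s * X a by rewrite mulr_ge0.
  lra.
have : s <= Y a / (- X a) by apply: ge_sup hsup.1 _ => r [p [hp hyp ->]]; exact: ratio_le.
rewrite ler_pdivlMr; lra.
Qed.

End TwoFunctionMinimax.

Section Minimax.
Variable R : realType.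
Implicit Types (A : set (nat -> R)) (mu a : nat -> R).

Definition convex_in J A := forall a b, A a -> A b -> forall t, 0 < t -> t < 1 ->
  exists2 c, A c & forall j, (j < J)%N -> c j = t * a j + (1 - t) * b j.

Definition weights J mu := (forall j, (j < J)%N -> 0 <= mu j) /\ \sum_(j < J) mu j = 1.

Definition avg_small J A := forall mu, weights J mu ->
  forall d, 0 < d -> exists2 a, A a & \sum_(j < J) mu j * a j <= d.

Definition extend_weights J th mu : nat -> R :=
  fun j => if (j < J)%N then th * mu j else 1 - th.

Lemma sum_extend_weights J th mu a :
  \sum_(j < J.+1) extend_weights J th mu j * a j =
  th * \sum_(j < J) mu j * a j + (1 - th) * a J.
Proof.
rewrite big_ord_recr /= /extend_weights ltnn mulr_sumr; congr (_ + _).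
by apply: eq_bigr => j _; rewrite ltn_ord mulrA.
Qed.

Lemma weights_extend J th mu : 0 <= th -> th <= 1 -> weights J mu ->
  weights J.+1 (extend_weights J th mu).
Proof.
move=> h0 h1 [hmu0 hmu1]; split => [j _|].
  by rewrite /extend_weights; case: ifP => hj; [rewrite mulr_ge0 ?hmu0|lra].
have := sum_extend_weights J th mu (fun _ => 1).
by under eq_bigr do rewrite mulr1; under [in RHS]eq_bigr do rewrite mulr1; rewrite hmu1 => ->; lra.
Qed.

Lemma sum_last_weight J a : \sum_(j < J.+1) (j == J :> nat)%:R * a j = a J.
Proof.
rewrite big_ord_recr /= eqxx mul1r big1 ?add0r // => j _.
by rewrite (ltn_eqF (ltn_ord j)) mul0r.
Qed.

Lemma weights_last J : weights J.+1 (fun j => (j == J)%:R).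
Proof.
split=> [j _|]; first exact: ler0n.
by have := sum_last_weight J (fun _ => 1); under eq_bigr do rewrite mulr1.
Qed.

Lemma not_avg_small J A : ~ avg_small J A ->
  exists mu, weights J mu /\ exists2 d, 0 < d & forall a, A a -> d < \sum_(j < J) mu j * a j.
Proof.
move=> hn; apply: contrapT => hn'; apply: hn => mu hmu d hd; apply: contrapT => hn2.
apply: hn'; exists mu; split => //; exists d => // a ha; rewrite ltNge; apply/negP => hle.
by apply: hn2; exists a.
Qed.

(* A weighting [mu] that beats the cut set is combined with the last coordinate, via the
   two-function minimax, into a weighting that beats [A]. *)
Lemma avg_small_cut J A e : 0 < e -> convex_in J.+1 A -> avg_small J.+1 A ->
  avg_small J [set a | A a /\ a J <= e].
Proof.
move=> he hconv hyp; apply: contrapT => /not_avg_small [mu [hmu [d hd hbig]]].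
pose X a := \sum_(j < J) mu j * a j - d.
pose Y a := a J - e.
have [th [th0 th1 hth]] : exists th,
    [/\ 0 <= th, th <= 1 & forall a, A a -> 0 <= th * X a + (1 - th) * Y a].
  apply: XY_comb_nonneg => [a b ha hb t t0 t1|a ha].
    have [c hc hcj] := hconv a b ha hb t t0 t1; exists c => //.
    rewrite /X /Y hcj //; split; last ring.
    rewrite (eq_bigr (fun j : 'I_J => t * (mu j * a j) + (1 - t) * (mu j * b j))).
      by rewrite big_split /= -!mulr_sumr; ring.
    by move=> j _; rewrite hcj ?(ltn_trans (ltn_ord j)) //; ring.
  rewrite /X /Y; have [haJ|haJ] := lerP (a J) e; last by right; lra.
  by left; have := hbig a (conj ha haJ); lra.
pose g := Num.min d e; have hg : 0 < g by rewrite lt_min hd he.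
have hg2 : 0 < g / 2 by rewrite divr_gt0.
have [a ha] := hyp _ (weights_extend th0 th1 hmu) _ hg2.
rewrite sum_extend_weights => hs; have := hth a ha; rewrite /X /Y.
have : th * g + (1 - th) * g <= th * d + (1 - th) * e.
  by apply: lerD; apply: ler_wpM2l; rewrite ?ge_min ?lexx ?orbT //; lra.
lra.
Qed.

Theorem convex_minimax J A : A !=set0 -> convex_in J A -> avg_small J A ->
  forall e, 0 < e -> exists2 a, A a & forall j, (j < J)%N -> a j <= e.
Proof.
elim: J A => [|J IH] A hne hconv hyp e he; first by case: hne => a ha; exists a.
have hcut0 : [set a | A a /\ a J <= e] !=set0.
  have [a ha] := hyp _ (weights_last J) e he.
  by rewrite sum_last_weight => haJ; exists a.
have hconv' : convex_in J [set a | A a /\ a J <= e].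
  move=> a b [ha haJ] [hb hbJ] t t0 t1; have [c hc hcj] := hconv a b ha hb t t0 t1.
  exists c => [|j hj]; last exact/hcj/ltnW.
  by split => //; rewrite hcj //; have := mix_le t0 t1 haJ hbJ; lra.
have [a [ha haJ] hj] := IH _ hcut0 hconv' (avg_small_cut he hconv hyp) e he.
by exists a => // j; rewrite ltnS leq_eqVlt => /orP[/eqP ->|/hj].
Qed.

End Minimax.

(* [P K h] is a property of a map [h] from [X] into a structure [K], and [gap q K h] measures
   how badly [h] violates the requirement [q]. *)
Section Approximation.
Variables (R : realType) (L : Lang R) (X : Struc L) (Q : Type).
Variable P : forall {K : Struc L}, (X -> K) -> Prop.
Variable gap : Q -> forall {K : Struc L}, (X -> K) -> R.
Hypothesis P_mix : forall (K1 K2 : Struc L) (h1 : X -> K1) (h2 : X -> K2) t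
  (t0 : 0 < t) (t1 : t < 1), P h1 -> P h2 -> P (fun x => (h1 x, h2 x) : mix K1 K2 t0 t1).
Hypothesis gap_mix : forall q (K1 K2 : Struc L) (h1 : X -> K1) (h2 : X -> K2) t
  (t0 : 0 < t) (t1 : t < 1),
  gap q (fun x => (h1 x, h2 x) : mix K1 K2 t0 t1) = t * gap q h1 + (1 - t) * gap q h2.
Hypothesis P_ex : exists (K : Struc L) (h : X -> K), P h.
Hypothesis gap_avg : forall J (q : 'I_J -> Q) (mu : nat -> R), weights J mu ->
  forall d, 0 < d -> exists (K : Struc L) (h : X -> K), P h /\ \sum_(l < J) mu l * gap (q l) h <= d.

Lemma finite_approx J (q : 'I_J -> Q) e : 0 < e ->
  exists Kh : {K : Struc L & X -> K}, P (projT2 Kh) /\ forall l, gap (q l) (projT2 Kh) <= e.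
Proof.
move=> he.
pose A := [set a : nat -> R |
  exists (K : Struc L) (h : X -> K), P h /\ forall l : 'I_J, a l = gap (q l) h].
have realized (K : Struc L) (h : X -> K) : P h -> A (ext_tuple (fun l => gap (q l) h) 0).
  by move=> hP; exists K, h; split => // l; rewrite ext_tuple_ord.
have [a [K [h [hP ha]]] hle] : exists2 a, A a & forall j, (j < J)%N -> a j <= e.
  apply: convex_minimax he.
  - by have [K [h hP]] := P_ex; exists (ext_tuple (fun l => gap (q l) h) 0); exact: realized.
  - move=> a b [K1 [h1 [hP1 ha]]] [K2 [h2 [hP2 hb]]] t t0 t1.
    exists (ext_tuple (fun l => gap (q l) (fun x => (h1 x, h2 x) : mix K1 K2 t0 t1)) 0).
      exact/realized/P_mix.
    move=> j hj; rewrite (ext_tuple_ord _ _ (Ordinal hj)) gap_mix.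
    by rewrite (ha (Ordinal hj)) (hb (Ordinal hj)).
  - move=> mu hmu d hd; have [K [h [hP hs]]] := gap_avg q hmu hd.
    exists (ext_tuple (fun l => gap (q l) h) 0); first exact: realized.
    by under eq_bigr do rewrite ext_tuple_ord.
by exists (existT _ K h); split => // l; rewrite -ha hle.
Qed.

Lemma ultra_approx :
  exists (I : Type) (U : set_system I) (K : I -> Struc L) (h : forall i, X -> K i),
  [/\ UltraFilter U, forall i, P (h i) & forall q e, 0 < e -> U [set i | gap q (h i) <= e]].
Proof.
(* An index is a finite list of requirements together with a precision [1 / (n + 1)]. *)
pose le (i j : seq {classic Q} * nat) := {subset i.1 <= j.1} /\ (i.2 <= j.2)%N.
have [U [hU hle]] : exists U, UltraFilter U /\ forall i0, U [set i | le i0 i].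
  apply: directed_ultra => [|i j k [h1 h2] [h3 h4]|i j].
  - by constructor; exact: ([::], 0%N).
  - by split => [x /h1 /h3 //|]; exact: leq_trans h4.
  - exists (i.1 ++ j.1, (i.2 + j.2)%N); split; split; rewrite /= ?leq_addr ?leq_addl //;
      by move=> x hx; rewrite mem_cat hx ?orbT.
pose eps (i : seq {classic Q} * nat) : R := i.2.+1%:R^-1.
have eps_gt0 i : 0 < eps i by rewrite invr_gt0 ltr0Sn.
pose Kh_ex i := finite_approx (fun l : 'I_(size i.1) => tnth (in_tuple i.1) l) (eps_gt0 i).
pose Kh i := sval (cid (Kh_ex i)).
have KhP i := svalP (cid (Kh_ex i)).
exists _, U, (fun i => projT1 (Kh i)), (fun i => projT2 (Kh i)).
split => // [i|q e he]; first exact: (KhP i).1.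
have [n hn] := ltr_add_invr he; rewrite add0r in hn.
apply: filterS (hle ([:: q], n)) => i /= [hsub hni].
have /seq_tnthP [l ->] : (q : {classic Q}) \in i.1 by apply: hsub; rewrite mem_seq1.
apply: le_trans ((KhP i).2 l) (le_trans _ (ltW hn)).
by rewrite lef_pV2 ?posrE ?ltr0Sn // ler_nat.
Qed.

End Approximation.

(** * Unions of chains *)

Section ChainLift.
Variables (R : realType) (L : Lang R) (Ms : nat -> Struc L) (es : forall n, Ms n -> Ms n.+1).

(* [lift x p] is the image of [x : Ms n] in [Ms p]; it is a junk point when [p < n]. *)
Fixpoint lift n (x : Ms n) p : Ms p :=
  match p with
  | 0 => if n =P 0 is ReflectT e then eq_rect n Ms x 0 e else pt (Ms 0)
  | p'.+1 => if n =P p'.+1 is ReflectT e then eq_rect n Ms x p'.+1 e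
             else if (n <= p')%N then es (lift x p') else pt (Ms p'.+1)
  end.

Lemma lift_id n (x : Ms n) : lift x n = x.
Proof.
by case: n x => [|n] x /=; case: eqP => // e; rewrite (eq_irrelevance e erefl).
Qed.

Lemma liftS n (x : Ms n) p : (n <= p)%N -> lift x p.+1 = es (lift x p).
Proof.
move=> hnp /=; case: (n =P p.+1) => [e|_]; last by rewrite hnp.
by exfalso; move: hnp; rewrite e ltnn.
Qed.

Lemma lift_ind n (x : Ms n) (Pr : forall p, Ms p -> Prop) :
  Pr n x -> (forall p (y : Ms p), (n <= p)%N -> Pr p y -> Pr p.+1 (es y)) ->
  forall p, (n <= p)%N -> Pr p (lift x p).
Proof.
move=> h0 hS p /subnK <-; elim: (p - n)%N => [|k IH]; first by rewrite lift_id.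
by rewrite addSn liftS ?leq_addl //; apply: hS => //; exact: leq_addl.
Qed.

Lemma lift_fun_ind n (Q : forall p, (Ms n -> Ms p) -> Prop) :
  Q n id -> (forall p (f : Ms n -> Ms p), (n <= p)%N -> Q p f -> Q p.+1 (fun x => es (f x))) ->
  forall p, (n <= p)%N -> Q p (fun x => lift x p).
Proof.
move=> h0 hS p /subnK <-; elim: (p - n)%N => [|k IH].
  by rewrite (_ : (fun x => lift x (0 + n)%N) = id) //; apply: funext => x; rewrite lift_id.
rewrite (_ : (fun x => lift x (k.+1 + n)%N) = fun x => es (lift x (k + n)%N)).
  by apply: hS => //; exact: leq_addl.
by apply: funext => x; exact: (liftS x (leq_addl k n)).
Qed.

Lemma lift_lift n m p (x : Ms n) : (n <= m)%N -> (m <= p)%N -> lift (lift x m) p = lift x p.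
Proof.
move=> hnm; apply: (lift_ind (Pr := fun p y => y = lift x p)) => // q y hmq ->.
by rewrite liftS //; exact: leq_trans hmq.
Qed.

Lemma lift_es n (x : Ms n) p : (n < p)%N -> lift (es x) p = lift x p.
Proof. by move=> h; rewrite -(lift_lift (m := n.+1) x) // liftS // lift_id. Qed.

Hypothesis es_emb : forall n, embedding (@es n).

Lemma embedding_lift n p : (n <= p)%N -> embedding (fun x : Ms n => lift x p).
Proof.
apply: (lift_fun_ind (Q := fun p f => embedding f)) => // q f _ hf.
exact: embedding_comp hf (es_emb q).
Qed.

Lemma elementary_lift n p : (forall n, elementary (@es n)) -> (n <= p)%N ->
  elementary (fun x : Ms n => lift x p).
Proof.
move=> es_elem; apply: (lift_fun_ind (Q := fun p f => elementary f)) => [phi v //|q f _ hf].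
by move=> phi v; rewrite -(hf phi v) -(es_elem q phi (f \o v)).
Qed.

Lemma dist_lift n p (x y : Ms n) : (n <= p)%N -> st_dist (lift x p) (lift y p) = st_dist x y.
Proof. by case/embedding_lift. Qed.

Lemma funI_lift n p f (a : 'I_(farity f) -> Ms n) : (n <= p)%N ->
  lift (funI a) p = funI (fun k => lift (a k) p).
Proof. by case/embedding_lift. Qed.

Lemma relI_lift n p r (a : 'I_(rarity r) -> Ms n) : (n <= p)%N ->
  relI (fun k => lift (a k) p) = relI a.
Proof. by case/embedding_lift. Qed.

End ChainLift.

(* The union of a chain of embeddings, built as the quotient of the disjoint union of the
   stages by eventual equality. *)
Section ChainUnion.
Variables (R : realType) (L : Lang R) (Ms : nat -> Struc L) (es : forall n, Ms n -> Ms n.+1).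
Hypothesis es_emb : forall n, embedding (@es n).

Local Notation lift := (lift es).
Definition chain_pt := {n : nat & Ms n}.
Definition stage (a : chain_pt) := projT1 a.
Definition elt (a : chain_pt) : Ms (stage a) := projT2 a.

Implicit Types a b c : chain_pt.

Definition same_pt a b :=
  forall q, (stage a <= q)%N -> (stage b <= q)%N -> lift (elt a) q = lift (elt b) q.

Lemma same_pt_at a b q : (stage a <= q)%N -> (stage b <= q)%N ->
  lift (elt a) q = lift (elt b) q -> same_pt a b.
Proof.
move=> ha hb e q' ha' hb'.
apply: (embedding_inj (embedding_lift es_emb (leq_addl q q'))).
rewrite /= !lift_lift ?leq_addl ?leq_addr //.
by rewrite -(lift_lift _ (m := q)) ?leq_addr // e lift_lift ?leq_addr.
Qed.

Lemma same_pt_refl a : same_pt a a. Proof. by []. Qed.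
Lemma same_pt_sym a b : same_pt a b -> same_pt b a. Proof. by move=> h q ha hb; rewrite h. Qed.
Lemma same_pt_trans a b c : same_pt a b -> same_pt b c -> same_pt a c.
Proof.
move=> h1 h2; have hq : (stage a <= stage a + stage b + stage c)%N by lia.
by apply: (same_pt_at hq) => [|]; [lia|rewrite h1 ?h2 //; lia].
Qed.

Definition cquot := quot (existT _ 0%N (pt (Ms 0)) : chain_pt) same_pt.
Definition cpi a : cquot := qpi _ same_pt_refl same_pt_sym same_pt_trans a.

Lemma cpi_same a : same_pt a (sval (cpi a)).
Proof. exact: (qpi_eqv _ same_pt_refl). Qed.
Arguments cpi_same : clear implicits.

Definition dist_at a b q := st_dist (lift (elt a) q) (lift (elt b) q).
Definition cdist a b := dist_at a b (stage a + stage b).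

Lemma dist_atE a b q : (stage a <= q)%N -> (stage b <= q)%N -> dist_at a b q = cdist a b.
Proof.
have up q' r : (stage a <= q')%N -> (stage b <= q')%N -> (q' <= r)%N ->
    dist_at a b r = dist_at a b q'.
  move=> ha hb hqr; rewrite /dist_at -(lift_lift _ (m := q') (elt a)) //.
  by rewrite -(lift_lift _ (m := q') (elt b)) // dist_lift.
move=> ha hb; rewrite /cdist -(up q (q + (stage a + stage b))%N) ?leq_addr //.
by apply: up; rewrite ?leq_addr ?leq_addl.
Qed.

Lemma cdist_congr a a' b b' : same_pt a a' -> same_pt b b' -> cdist a b = cdist a' b'.
Proof.
move=> h1 h2; set q := (stage a + stage b + stage a' + stage b')%N.
rewrite -(@dist_atE a b q) -1?(@dist_atE a' b' q) /dist_at ?h1 ?h2 //; rewrite /q; lia.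
Qed.

Definition cq_dist (x y : cquot) := cdist (sval x) (sval y).

Lemma cq_inh : inhabited cquot. Proof. by constructor; exact: cpi (existT _ 0%N (pt (Ms 0))). Qed.
Lemma cq_dist_refl x : cq_dist x x = 0. Proof. by rewrite /cq_dist /cdist /dist_at dist_refl. Qed.
Lemma cq_dist_sym x y : cq_dist x y = cq_dist y x.
Proof. by rewrite /cq_dist /cdist addnC /dist_at dist_sym. Qed.
Lemma cq_dist_le1 x y : cq_dist x y <= 1. Proof. exact: dist_le1. Qed.

Lemma cq_dist_tri x y z : cq_dist x z <= cq_dist x y + cq_dist y z.
Proof.
rewrite /cq_dist; set q := (stage (sval x) + stage (sval y) + stage (sval z))%N.
rewrite -(@dist_atE _ _ q) -1?(@dist_atE _ _ q) -1?(@dist_atE (sval y) _ q) ?dist_tri //;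
  rewrite /q; lia.
Qed.

Lemma cq_dist_sep x y : cq_dist x y = 0 -> x = y.
Proof.
move=> h; apply: (eqv_sval same_pt_refl same_pt_sym same_pt_trans).
by apply: (@same_pt_at _ _ (stage (sval x) + stage (sval y))); rewrite ?leq_addr ?leq_addl //;
  exact: dist_sep.
Qed.

Definition max_stage n (r : 'I_n -> chain_pt) : nat := \max_(k < n) stage (r k).

Lemma max_stage_ge n (r : 'I_n -> chain_pt) k : (stage (r k) <= max_stage r)%N.
Proof. exact: (leq_bigmax (F := fun k => stage (r k))). Qed.

Definition cq_funI (f : Fsym L) (a : 'I_(farity f) -> cquot) : cquot :=
  let r k := sval (a k) in
  cpi (existT _ (max_stage r) (funI (fun k => lift (elt (r k)) (max_stage r)))).

Definition cq_relI (s : Rsym L) (a : 'I_(rarity s) -> cquot) : R :=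
  let r k := sval (a k) in relI (fun k => lift (elt (r k)) (max_stage r)).

Lemma cq_relI_at s (r : 'I_(rarity s) -> chain_pt) q : (max_stage r <= q)%N ->
  relI (fun k => lift (elt (r k)) (max_stage r)) = relI (fun k => lift (elt (r k)) q).
Proof.
move=> h; rewrite -(relI_lift es_emb (fun k => lift (elt (r k)) (max_stage r)) h).
by congr relI; apply: funext => k; rewrite lift_lift ?max_stage_ge.
Qed.

Lemma dist_at_max n (ra rb : 'I_n -> chain_pt) k :
  dist_at (ra k) (rb k) (max_stage ra + max_stage rb) = cdist (ra k) (rb k).
Proof.
apply: dist_atE; [apply: leq_trans (max_stage_ge ra k) (leq_addr _ _)|].
exact: leq_trans (max_stage_ge rb k) (leq_addl _ _).
Qed.

Lemma lift_max_stage n (r : 'I_n -> chain_pt) q : (max_stage r <= q)%N ->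
  (fun k => lift (lift (elt (r k)) (max_stage r)) q) = (fun k => lift (elt (r k)) q).
Proof. by move=> h; apply: funext => k; rewrite lift_lift ?max_stage_ge. Qed.

Lemma cq_funI_lip f (a b : 'I_(farity f) -> cquot) :
  cq_dist (cq_funI a) (cq_funI b) <= fLip f * \sum_(k < farity f) cq_dist (a k) (b k).
Proof.
rewrite /cq_dist /cq_funI -(cdist_congr (cpi_same _) (cpi_same _)).
set ra := fun k => sval (a k); set rb := fun k => sval (b k).
set q := (max_stage ra + max_stage rb)%N.
rewrite -(@dist_atE _ _ q) ?leq_addr ?leq_addl // /dist_at /elt /=.
rewrite !funI_lift ?leq_addr ?leq_addl // !lift_max_stage ?leq_addr ?leq_addl //.
apply: le_trans (funI_lip _ _) _; rewrite ler_wpM2l ?fLip_ge0 //.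
by apply: ler_sum => k _; rewrite -(dist_at_max ra rb).
Qed.

Lemma cq_relI_lip s (a b : 'I_(rarity s) -> cquot) :
  `|cq_relI a - cq_relI b| <= rLip s * \sum_(k < rarity s) cq_dist (a k) (b k).
Proof.
rewrite /cq_relI /cq_dist; set ra := fun k => sval (a k); set rb := fun k => sval (b k).
rewrite (@cq_relI_at _ ra (max_stage ra + max_stage rb)) ?leq_addr //.
rewrite (@cq_relI_at _ rb (max_stage ra + max_stage rb)) ?leq_addl //.
apply: le_trans (relI_lip _ _) _; rewrite ler_wpM2l ?rLip_ge0 //.
by apply: ler_sum => k _; rewrite -(dist_at_max ra rb).
Qed.

Definition chain_union : Struc L := {|
  carrier := cquot; st_dist := cq_dist; st_inh := cq_inh;
  dist_refl := cq_dist_refl; dist_sep := cq_dist_sep; dist_sym := cq_dist_sym;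
  dist_tri := cq_dist_tri; dist_le1 := cq_dist_le1; funI := cq_funI; relI := cq_relI;
  funI_lip := cq_funI_lip; relI_lip := cq_relI_lip |}.

Definition chain_in n (x : Ms n) : chain_union := cpi (existT _ n x).

Lemma same_pt_chain_in n (x : Ms n) q : (n <= q)%N ->
  (stage (sval (chain_in x)) <= q)%N -> lift (elt (sval (chain_in x))) q = lift x q.
Proof. by move=> hn hq; symmetry; apply: (cpi_same (existT _ n x)). Qed.

Lemma embedding_chain_in n : embedding (@chain_in n).
Proof.
split => [x y|f a|s a] /=.
- rewrite /cq_dist -(cdist_congr (cpi_same (existT _ n x)) (cpi_same (existT _ n y))).
  by rewrite -(@dist_atE _ _ n) //= /dist_at /elt /= !lift_id.
- apply: (eqv_qpi _ same_pt_refl); set r := fun k => sval (chain_in (a k)).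
  apply: (@same_pt_at _ _ (n + max_stage r)) => /=; rewrite ?leq_addr ?leq_addl //.
  rewrite /elt /= !funI_lift ?leq_addr ?leq_addl //; congr funI; apply: funext => k.
  rewrite lift_lift ?leq_addl ?max_stage_ge // same_pt_chain_in ?leq_addr //.
  exact: leq_trans (max_stage_ge r k) (leq_addl _ _).
- rewrite /cq_relI; set r := fun k => sval (chain_in (a k)).
  rewrite (@cq_relI_at _ r (n + max_stage r)) ?leq_addl //.
  rewrite -(relI_lift es_emb a (leq_addr (max_stage r) n)); congr relI; apply: funext => k.
  rewrite same_pt_chain_in ?leq_addr //.
  exact: leq_trans (max_stage_ge r k) (leq_addl _ _).
Qed.

Lemma chain_union_is_union : is_union es chain_in.
Proof.
split => [|n x|y]; first exact: embedding_chain_in.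
  by apply: (eqv_qpi _ same_pt_refl) => q /= h1 h2; rewrite /elt /= lift_es.
exists (stage (sval y)), (elt (sval y)); rewrite /chain_in.
have -> : existT _ (stage (sval y)) (elt (sval y)) = sval y by case: (sval y).
exact: qpi_val.
Qed.

End ChainUnion.

Section UnionOfChain.
Variables (R : realType) (L : Lang R) (Ms : nat -> Struc L) (N : Struc L).
Local Unset Implicit Arguments.
Variables (es : forall n, Ms n -> Ms n.+1) (gs : forall n, Ms n -> N).
Local Set Implicit Arguments.
Hypothesis hu : is_union es gs.

Lemma gs_lift n (x : Ms n) p : (n <= p)%N -> gs p (lift es x p) = gs n x.
Proof.
case: hu => _ hc _.
by apply: (lift_ind (Pr := fun p y => gs p y = gs n x)) => // q y _ <-; exact: hc.
Qed.

Lemma union_finite_lift (F : seq nat) (w : nat -> N) :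
  exists q (w' : nat -> Ms q), forall k, k \in F -> gs q (w' k) = w k.
Proof.
elim: F => [|k F [q [w' hw']]]; first by exists 0%N, (fun _ => pt (Ms 0)).
case: hu => _ _ hs; have [m [b hb]] := hs (w k).
exists (m + q)%N, (fun j => if j == k then lift es b (m + q) else lift es (w' j) (m + q)) => j.
rewrite in_cons; case: (j =P k) => [->|hjk] /= h; first by rewrite gs_lift ?leq_addr.
by rewrite gs_lift ?leq_addl // hw'.
Qed.

Lemma AE_condition_union (c : condition L) : AE_condition c ->
  (forall n (v : nat -> Ms n), fval v c.1 <= fval v c.2) ->
  forall v : nat -> N, fval v c.1 <= fval v c.2.
Proof.
case: c => c1 c2 [_ [/= -> [xs [ys [phi [hq /= ->]]]]]] hM v.
rewrite mul0r; apply: le_fval_Infs => w hw.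
have [q [w' hw']] := union_finite_lift (fv (Sups ys phi)) w.
have [gs_emb _ _] := hu.
rewrite (@fval_agree _ _ _ _ (gs q \o w')); last by move=> x /mem_fv hx /=; rewrite hw'.
apply: le_trans _ (fval_Sups_emb_le w' ys (gs_emb q) hq).
apply: le_trans _ (fval_Infs_le (Sups ys phi) (_ : agree_off xs w' w')) => //.
by have := hM q w'; rewrite mul0r.
Qed.

Hypothesis es_elem : forall n, elementary (es n).

Definition elementary_at phi := forall n (u : nat -> Ms n), fval (gs n \o u) phi = fval u phi.

Lemma elementary_at_Sup p x : elementary_at p -> elementary_at (Sup x p).
Proof.
move=> IH n u; rewrite [fval (gs n \o u) _]/=; apply: sup_rangeE => [a|e he].
  case: hu => _ _ hs; have [m [b <-]] := hs a; set q := (m + n)%N.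
  have -> : upd (gs n \o u) x (gs m b) = gs q \o upd (fun k => lift es (u k) q) x (lift es b q).
    by apply: funext => k; rewrite /upd /=; case: (k == x); rewrite gs_lift // ?leq_addr ?leq_addl.
  rewrite IH; apply: le_trans (le_fval_Sup _ _ _ _) _.
  by rewrite (elementary_lift es_elem (leq_addl m n) (Sup x p) u).
have [b hb] := fval_Sup_adherent u x p he; exists (gs n b).
have -> : upd (gs n \o u) x (gs n b) = gs n \o upd u x b.
  by apply: funext => k; rewrite /upd /=; case: (k == x).
by rewrite IH.
Qed.

Lemma elementary_union n : elementary (gs n).
Proof.
have [gs_emb _ _] := hu.
have hS c p : elementary_at p -> elementary_at (Scale c p) by move=> IH m u /=; rewrite IH.
move=> phi; move: n; elim: phi => //.
- by move=> t1 t2 n u /=; rewrite !tval_comp_emb //; case: (gs_emb n).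
- move=> r args n u /=; case: (gs_emb n) => _ _ <-.
  by congr relI; apply: funext => i; rewrite tval_comp_emb.
- by move=> p IHp q IHq n u /=; rewrite IHp IHq.
- by move=> x p IH; exact: (elementary_at_Sup x IH).
- by move=> x p IH n u; rewrite !fval_InfE (elementary_at_Sup x (hS _ _ IH)).
Qed.

End UnionOfChain.

(** * Extensions of models of the forall-exists consequences *)

Lemma mem_flatten_iota (T : eqType) (G : nat -> seq T) J b :
  reflect (exists2 l, (l < J)%N & b \in G l) (b \in flatten [seq G l | l <- iota 0 J]).
Proof.
apply: (iffP flattenP) => [[s /mapP [l hl ->] hb]|[l hl hb]].
  by exists l => //; move: hl; rewrite mem_iota.
by exists (G l) => //; apply: map_f; rewrite mem_iota.
Qed.

Definition pair_code (l k : nat) : nat := (Cantor.to_nat (l, k)).*2.+1.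

Lemma odd_pair_code l k : odd (pair_code l k).
Proof. by rewrite /pair_code /= odd_double. Qed.

Lemma pair_codeK l k : Cantor.of_nat (pair_code l k)./2 = (l, k).
Proof.
rewrite /pair_code -[(_.*2).+1]/(true + (Cantor.to_nat (l, k)).*2)%N half_bit_double.
exact: Cantor.cancel_of_to.
Qed.

Lemma pair_code_half n : odd n ->
  pair_code (Cantor.of_nat n./2).1 (Cantor.of_nat n./2).2 = n.
Proof.
move=> hn; rewrite /pair_code -surjective_pairing Cantor.cancel_to_of.
by rewrite -[in RHS](odd_double_half n) hn.
Qed.

(* Encoding of [J] weighted blocks [sup_(ys l) phi l] with parameters [u l] from [M] as one
   forall-exists formula: the parameters become the even variables, the existential
   variables of block [l] are renamed apart to odd ones, and [c0] is subtracted. *)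
Section AEBlock.
Variables (R : realType) (L : Lang R) (K M : Struc L) (g : M -> K) (J : nat).
Variables (phi : nat -> formula L) (ys : nat -> seq nat) (u : nat -> nat -> M).
Variables (mu : nat -> R) (c0 : R).
Hypotheses (phi_qf : forall l, qfree (phi l)) (hmu : weights J mu).

Definition block_params : seq {classic M} := flatten [seq map (u l) (fv (phi l)) | l <- iota 0 J].
Definition block_rn l k :=
  if k \in ys l then pair_code l k else (index (u l k : {classic M}) block_params).*2.
Definition block_univ := [seq m.*2 | m <- iota 0 (size block_params)].
Definition block_exist := flatten [seq map (pair_code l) (ys l) | l <- iota 0 J].
Definition block_body :=
  Add (sumf (fun l => Scale (mu l) (frename (block_rn l) (phi l))) J) (Scale (- c0) (One L)).
Definition block_formula := Infs block_univ (Sups block_exist block_body).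

Lemma fval_block_body (w : nat -> K) :
  fval w block_body = \sum_(l < J) mu l * fval (w \o block_rn l) (phi l) - c0.
Proof.
rewrite /block_body [fval w (Add _ _)]/= fval_sumf /= mulr1; congr (_ + _).
by apply: eq_bigr => l _ /=; rewrite fval_rename.
Qed.

Lemma odd_block_exist n : n \in block_exist -> odd n.
Proof. by case/mem_flatten_iota => l _ /mapP [k _ ->]; exact: odd_pair_code. Qed.

Lemma mem_block_params l k :
  (l < J)%N -> k \in fv (phi l) -> (u l k : {classic M}) \in block_params.
Proof. by move=> hl hk; apply/mem_flatten_iota; exists l => //; exact: map_f. Qed.

Lemma fval_block_le (v : nat -> K) :
  (forall a, a \in block_params -> v (index a block_params).*2 = g a) ->
  fval v (Sups block_exist block_body) <=
  \sum_(l < J) mu l * fval (g \o u l) (Sups (ys l) (phi l)) - c0.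
Proof.
move=> hv; apply: fval_Sups_le => w hw; rewrite fval_block_body lerD2r.
apply: ler_sum => l _; apply: ler_wpM2l; first exact: hmu.1.
pose wl k := if k \in ys l then w (block_rn l k) else g (u l k).
rewrite (@fval_agree _ _ _ _ wl); last first.
  move=> k hk; rewrite /wl /=; case: ifP => hky //.
  rewrite /block_rn hky -hw; first by apply: hv; apply: mem_block_params => //; exact: mem_fv.
  by apply/negP => /odd_block_exist; rewrite odd_double.
by apply: le_fval_Sups => k hk; rewrite /wl (negbTE hk).
Qed.

Lemma fval_block_ge (v : nat -> K) :
  (forall a, a \in block_params -> v (index a block_params).*2 = g a) ->
  \sum_(l < J) mu l * fval (g \o u l) (Sups (ys l) (phi l)) - c0 <=
  fval v (Sups block_exist block_body).
Proof.
move=> hv; apply/ler_addgt0Pr => e he; have he2 : 0 < e / 2 by rewrite divr_gt0.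
pose W l := sval (cid (fval_Sups_adherent (ys l) (phi l) (g \o u l) he2)).
have WP l := svalP (cid (fval_Sups_adherent (ys l) (phi l) (g \o u l) he2)).
pose w n := if odd n then
    (let: (l, k) := Cantor.of_nat n./2 in if (l < J)%N && (k \in ys l) then W l k else v n)
  else v n.
have hw : agree_off block_exist v w.
  move=> n hn; rewrite /w; case: ifP => hodd //; case: (Cantor.of_nat n./2) (pair_code_half hodd).
  move=> l k hlk; case: ifP => // /andP [hl hk]; exfalso; move/negP: hn; apply.
  by apply/mem_flatten_iota; exists l => //; rewrite -hlk; exact: map_f.
have eqW l : (l < J)%N -> fval (w \o block_rn l) (phi l) = fval (W l) (phi l).
  move=> hl; apply: fval_agree => k hk /=; rewrite /block_rn.
  case: ifP => hky; rewrite /w; first by rewrite odd_pair_code pair_codeK hl hky.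
  rewrite odd_double hv; last by apply: mem_block_params => //; exact: mem_fv.
  exact: (WP l).1 k (negbT hky).
have := le_fval_Sups block_body hw; rewrite fval_block_body.
have : \sum_(l < J) mu l * (fval (g \o u l) (Sups (ys l) (phi l)) - e / 2) <=
       \sum_(l < J) mu l * fval (w \o block_rn l) (phi l).
  apply: ler_sum => l _; rewrite eqW //; apply: ler_wpM2l; first exact: hmu.1.
  exact: ltW (WP l).2.
rewrite (eq_bigr (fun l : 'I_J => mu l * fval (g \o u l) (Sups (ys l) (phi l)) - e / 2 * mu l)).
  by rewrite sumrB -mulr_sumr hmu.2; lra.
by move=> l _; ring.
Qed.

Lemma sentence_block_formula : sentence block_formula.
Proof.
move=> x /ffree_Infs [hX /ffree_Sups [hY]] /= [|//].
case/ffree_sumf => l hl /= /(ffree_rename (phi_qf l)) [k hk hx]; subst x.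
move: hX hY; rewrite /block_rn; case: ifP => hky.
  by move=> _ /negP; apply; apply/mem_flatten_iota; exists l => //; exact: map_f.
move=> /negP hX _; apply: hX; apply: map_f; rewrite mem_iota add0n /= index_mem.
by apply: mem_block_params => //; exact: mem_fv.
Qed.

End AEBlock.

Section Consequences.
Variables (R : realType) (L : Lang R).

Definition AE_consequence (T : theory L) (c : condition L) := AE_condition c /\
  forall K : Struc L, models K T -> forall v : nat -> K, fval v c.1 <= fval v c.2.

Lemma sentence_AE_consequence T c : AE_consequence T c -> sentence c.1 /\ sentence c.2.
Proof. by case=> [[hs [-> _]] _]; split => // x. Qed.

(* Along an embedding these sups can only grow, so this says that they are preserved. *)
Definition exist_closed (M N : Struc L) (e : M -> N) := forall (p : formula L) ys (u : nat -> M),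
  qfree p -> fval (e \o u) (Sups ys p) <= fval u (Sups ys p).

End Consequences.

Section ExistClosedModelExtension.
Variables (R : realType) (L : Lang R) (T : theory L) (M : Struc L).
Hypothesis hM : models M (AE_consequence T).

Lemma AE_consequence_model : exists K : Struc L, models K T.
Proof.
apply: contrapT => hn.
have h : AE_consequence T (zero_f L, Scale (-1) (One L)).
  split; last by move=> K hK; case: hn; exists K.
  by split; [move=> x|split => //; exists [::], [::], (Scale (-1) (One L))].
by have := hM h (fun _ => pt M); rewrite /= mul0r mulr1; lra.
Qed.

Definition sup_req := ({p : formula L | qfree p} * seq nat * (nat -> M))%type.
Definition req_sup (r : sup_req) := Sups r.1.2 (sval r.1.1).
Definition sup_gap (r : sup_req) (K : Struc L) (g : M -> K) :=
  fval (g \o r.2) (req_sup r) - fval r.2 (req_sup r).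

Lemma sup_gap_mix r (K1 K2 : Struc L) (h1 : M -> K1) (h2 : M -> K2) t (t0 : 0 < t) (t1 : t < 1) :
  sup_gap r (fun x => (h1 x, h2 x) : mix K1 K2 t0 t1) = t * sup_gap r h1 + (1 - t) * sup_gap r h2.
Proof. by rewrite /sup_gap fval_mix_pair; ring. Qed.

(* Otherwise the AE-consequence of [T] saying that the weighted sum of the gaps exceeds [d]
   would fail in [M] at the parameters. *)
Lemma sup_gap_avg J (q : 'I_J -> sup_req) mu : weights J mu -> forall d, 0 < d ->
  exists (K : Struc L) (g : M -> K), models K T /\ \sum_(l < J) mu l * sup_gap (q l) g <= d.
Proof.
move=> hmu d hd; apply: contrapT => H.
have H' (K : Struc L) (g : M -> K) : models K T -> d < \sum_(l < J) mu l * sup_gap (q l) g.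
  by move=> hK; rewrite ltNge; apply/negP => hle; apply: H; exists K, g.
pose qn := ext_tuple q (exist _ (zero_f L) Logic.I, [::], fun _ => pt M).
pose phi l := sval (qn l).1.1; pose ys l := (qn l).1.2; pose u l := (qn l).2.
have phi_qf l : qfree (phi l) by rewrite /phi; case: (qn l) => [[[]]].
pose c0 := \sum_(l < J) mu l * fval (u l) (Sups (ys l) (phi l)) + d.
have gapE (K : Struc L) (g : M -> K) : \sum_(l < J) mu l * sup_gap (q l) g =
    \sum_(l < J) mu l * fval (g \o u l) (Sups (ys l) (phi l)) - (c0 - d).
  rewrite /c0 addrK -sumrB; apply: eq_bigr => l _.
  by rewrite /sup_gap /req_sup /phi /ys /u /qn ext_tuple_ord; ring.
set S := block_params J phi u.
have hC : AE_consequence T (zero_f L, block_formula J phi ys u mu c0).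
  split.
    split; first exact: sentence_block_formula.
    split => //; exists (block_univ J phi u), (block_exist J ys), (block_body J phi ys u mu c0).
    by split => //; split => //; apply: qfree_sumf => l _ /=; exact: qfree_rename.
  move=> K hK v /=; rewrite mul0r; apply: le_fval_Infs => w _.
  pose gw (a : M) := w (index (a : {classic M}) S).*2.
  have hge := fval_block_ge (g := gw) ys c0 phi_qf hmu (fun _ _ => erefl).
  by apply: le_trans hge; have := H' K gw hK; rewrite gapE; lra.
pose v0 m := nth (pt M) S m./2.
have h1 := hM hC v0; rewrite /= mul0r in h1.
have h2 := @fval_Infs_le _ _ _ (block_univ J phi u)
  (Sups (block_exist J ys) (block_body J phi ys u mu c0)) v0 v0
  (fun n _ => erefl).
have h3 : fval v0 (Sups (block_exist J ys) (block_body J phi ys u mu c0)) <=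
    \sum_(l < J) mu l * fval (u l) (Sups (ys l) (phi l)) - c0.
  apply: (fval_block_le (g := id)) => // a ha; rewrite /v0 doubleK.
  exact: (nth_index (pt M : {classic M}) ha).
have := le_trans h1 (le_trans h2 h3); rewrite /c0; lra.
Qed.

Theorem exist_closed_model_ext :
  exists (N : Struc L) (e : M -> N), [/\ models N T, embedding e & exist_closed e].
Proof.
have [K hK] := AE_consequence_model.
have [I [U [Ks [g [hU hT hgap]]]]] := ultra_approx (P := fun K _ => models K T) (gap := sup_gap)
  (fun _ _ _ _ _ t0 t1 m1 m2 => models_mix m1 m2) sup_gap_mix
  (ex_intro _ K (ex_intro _ (fun _ => pt K) hK)) sup_gap_avg.
have happrox (p : formula L) (w : nat -> M) : qfree p -> forall e, 0 < e ->
    U [set i | `|fval (g i \o w) p - fval w p| <= e].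
  move=> hq e he; have hq' : qfree (Scale (-1) p) by [].
  apply: filterS (filterI (hgap (exist _ p hq, [::], w) e he) (hgap (exist _ _ hq', [::], w) e he)).
  move=> i [/= h1 h2]; rewrite /sup_gap /req_sup /= in h1 h2.
  by rewrite ler_norml; apply/andP; split; lra.
have [N [f [hf hval hbnd hmod]]] := ultraproduct_of_approx happrox.
exists N, f; split; [exact: hmod hT|exact: hf|move=> p ys u hq].
rewrite hval; apply/ler_addgt0Pr => e he.
apply: ulim_le (hbnd _ _) _; apply: filterS (hgap (exist _ p hq, ys, u) e he) => i /=.
by rewrite /sup_gap; lra.
Qed.

End ExistClosedModelExtension.

Section QfBlock.
Variables (R : realType) (L : Lang R) (N : Struc L) (J : nat).
Variables (phi : nat -> formula L) (w : nat -> nat -> N) (mu : nat -> R).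
Hypothesis phi_qf : forall l, qfree (phi l).

Local Notation S := (block_params J phi w).

Definition qf_block := Scale (-1)
  (sumf (fun l => Scale (mu l) (frename (fun k => index (w l k : {classic N}) S) (phi l))) J).

Lemma qfree_qf_block : qfree qf_block.
Proof. by apply: qfree_sumf => l _ /=; exact: qfree_rename. Qed.

Lemma fval_qf_block (K : Struc L) (v : nat -> K) (g : N -> K) :
  (forall b, b \in S -> v (index b S) = g b) ->
  fval v qf_block = - \sum_(l < J) mu l * fval (g \o w l) (phi l).
Proof.
move=> hv; rewrite [fval v _]/= fval_sumf mulN1r; congr (- _); apply: eq_bigr => l _ /=.
congr (_ * _); apply: fval_rename_agree => // k hk.
by apply: hv; apply: mem_block_params => //; exact: mem_fv.
Qed.

End QfBlock.

Section ElementaryAmalgam.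
Variables (R : realType) (L : Lang R) (M N : Struc L) (e : M -> N).
Hypotheses (he : embedding e) (hec : exist_closed e).

Definition in_image (b : N) := `[< exists x, e x = b >].
Definition einv (b : N) : M := @xget {classic M} (pt M) [set x | e x = b].

Lemma einvK b : in_image b -> e (einv b) = b.
Proof. by move/asboolP => [x hx]; exact: (@xgetI {classic M} (pt M) [set x | e x = b] x). Qed.

Lemma einv_e x : einv (e x) = x.
Proof. by apply: (embedding_inj he); rewrite einvK //; apply/asboolP; exists x. Qed.

Lemma in_image_e x : in_image (e x).
Proof. by apply/asboolP; exists x. Qed.

Lemma elementary_retraction (h : N -> M) : (forall x, h (e x) = x) -> elementary (h \o e).
Proof. by move=> hid phi v; congr fval; apply: funext => n /=; rewrite hid. Qed.

Definition qf_req := ({p : formula L | qfree p} * (nat -> N))%type.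
Definition qf_gap (r : qf_req) (K : Struc L) (h : N -> K) :=
  fval (h \o r.2) (sval r.1) - fval r.2 (sval r.1).

Lemma qf_gap_mix r (K1 K2 : Struc L) (h1 : N -> K1) (h2 : N -> K2) t (t0 : 0 < t) (t1 : t < 1) :
  qf_gap r (fun x => (h1 x, h2 x) : mix K1 K2 t0 t1) = t * qf_gap r h1 + (1 - t) * qf_gap r h2.
Proof. by rewrite /qf_gap fval_mix_pair; ring. Qed.

Lemma elementary_mix_pair (K1 K2 : Struc L) (h1 : N -> K1) (h2 : N -> K2) t (t0 : 0 < t)
  (t1 : t < 1) : elementary (h1 \o e) -> elementary (h2 \o e) ->
  elementary ((fun x => (h1 x, h2 x) : mix K1 K2 t0 t1) \o e).
Proof.
move=> el1 el2 phi v.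
transitivity (t * fval ((h1 \o e) \o v) phi + (1 - t) * fval ((h2 \o e) \o v) phi).
  exact: fval_mix_pair.
by rewrite el1 el2; ring.
Qed.

(* The parameters outside the image of [e] are quantified existentially; since [e] does not
   increase sups, approximate witnesses for them can be found in [M]. *)
Lemma qf_gap_avg J (q : 'I_J -> qf_req) mu : weights J mu -> forall d, 0 < d ->
  exists (K : Struc L) (h : N -> K), elementary (h \o e) /\
    \sum_(l < J) mu l * qf_gap (q l) h <= d.
Proof.
move=> hmu d hd; pose qn := ext_tuple q (exist _ (zero_f L) Logic.I, fun _ => pt N).
pose phi l := sval (qn l).1; pose w l := (qn l).2.
have phi_qf l : qfree (phi l) by rewrite /phi; case: (qn l) => [[]].
set S := block_params J phi w; pose Psi := qf_block J phi w mu.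
pose ys := [seq m <- iota 0 (size S) | ~~ in_image (nth (pt N) S m)].
pose u m := einv (nth (pt N) S m).
pose w' m := if m \in ys then nth (pt N) S m else e (u m).
have hw' b : b \in S -> w' (index b S) = b.
  move=> hb; rewrite /w'; case: ifP => hin; first exact: (nth_index (pt N : {classic N}) hb).
  move: hin; rewrite mem_filter mem_iota /= add0n index_mem hb andbT => /negbFE.
  by rewrite /u (nth_index (pt N : {classic N}) hb) => /einvK.
have [u' [hu' hu'Psi]] := fval_Sups_adherent ys Psi u hd.
pose h b := if in_image b then einv b else u' (index (b : {classic N}) S).
have hu'h b : b \in S -> u' (index b S) = h b.
  move=> hb; rewrite /h; case: ifP => hE //; rewrite -hu'; last first.
    by rewrite mem_filter (nth_index (pt N : {classic N}) hb) hE.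
  by rewrite /u (nth_index (pt N : {classic N}) hb).
exists M, h; split.
  by apply: elementary_retraction => x; rewrite /h in_image_e einv_e.
have hw'u : agree_off ys (e \o u) w' by move=> m hm; rewrite /w' (negbTE hm).
have hle := le_trans (le_fval_Sups Psi hw'u) (hec ys u (qfree_qf_block J w mu phi_qf)).
rewrite (fval_qf_block mu phi_qf (g := id) hw') in hle.
rewrite (fval_qf_block mu phi_qf hu'h) in hu'Psi.
have -> : \sum_(l < J) mu l * qf_gap (q l) h =
    \sum_(l < J) mu l * fval (h \o w l) (phi l) - \sum_(l < J) mu l * fval (id \o w l) (phi l).
  by rewrite -sumrB; apply: eq_bigr => l _; rewrite /qf_gap /phi /w /qn ext_tuple_ord; ring.
lra.
Qed.

Theorem elementary_amalgam :
  exists (M1 : Struc L) (f : N -> M1), embedding f /\ elementary (f \o e).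
Proof.
have [I [U [K [h [hU hel hgap]]]]] := ultra_approx
  (P := fun K (h : N -> K) => elementary (h \o e)) (gap := qf_gap)
  (fun _ _ _ _ _ t0 t1 el1 el2 => elementary_mix_pair t0 t1 el1 el2) qf_gap_mix
  (ex_intro _ M (ex_intro _ einv (elementary_retraction einv_e))) qf_gap_avg.
have happrox (p : formula L) (w : nat -> N) : qfree p -> forall e, 0 < e ->
    U [set i | `|fval (h i \o w) p - fval w p| <= e].
  move=> hq eps heps; have hq' : qfree (Scale (-1) p) by [].
  apply: filterS (filterI (hgap (exist _ p hq, w) eps heps) (hgap (exist _ _ hq', w) eps heps)).
  by move=> i [/= h1 h2]; rewrite ler_norml; apply/andP; split; rewrite /qf_gap /= in h1 h2; lra.
have [M1 [f [hf hval _ _]]] := ultraproduct_of_approx happrox.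
exists M1, f; split => // phi v.
transitivity (fval (f \o (e \o v)) phi) => //.
rewrite hval -[RHS](ulim_cst (U := U)); congr ulim; apply: funext => i.
exact: (hel i phi v).
Qed.

End ElementaryAmalgam.

Lemma models_elementary (R : realType) (L : Lang R) (M K : Struc L) (j : M -> K) (T : theory L) :
  elementary j -> closed_theory T -> models M T -> models K T.
Proof.
move=> hj hT hM c hc v; have [s1 s2] := hT c hc.
rewrite (fval_sentence v (j \o fun _ => pt M) s1) (fval_sentence v (j \o fun _ => pt M) s2) !hj.
exact: hM.
Qed.

Section ChainOfModels.
Variables (R : realType) (L : Lang R) (T : theory L).

Record AE_model := { AE_carrier :> Struc L; AE_modelP : models AE_carrier (AE_consequence T) }.

Lemma AE_model_step (M : AE_model) :
  exists p : {N : Struc L & {M' : AE_model & ((M -> N) * (N -> M'))%type}},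
  [/\ models (projT1 p) T, embedding (projT2 (projT2 p)).1, embedding (projT2 (projT2 p)).2 &
      elementary ((projT2 (projT2 p)).2 \o (projT2 (projT2 p)).1)].
Proof.
have [N [e [hN he hec]]] := exist_closed_model_ext (@AE_modelP M).
have [M1 [f [hf hfe]]] := elementary_amalgam he hec.
have hM1 := models_elementary hfe (fun c => @sentence_AE_consequence _ _ T c) (@AE_modelP M).
by exists (existT _ N (existT _ (Build_AE_model hM1) (e, f))).
Qed.

Definition next (M : AE_model) := sval (cid (AE_model_step M)).

Variable M0 : AE_model.

Fixpoint chain n : AE_model := if n is n'.+1 then projT1 (projT2 (next (chain n'))) else M0.

Definition ext_model n : Struc L := projT1 (next (chain n)).
Definition into_ext n : chain n -> ext_model n := (projT2 (projT2 (next (chain n)))).1.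
Definition from_ext n : ext_model n -> chain n.+1 := (projT2 (projT2 (next (chain n)))).2.

Lemma next_chainP n : [/\ models (ext_model n) T, embedding (@into_ext n),
  embedding (@from_ext n) & elementary (@from_ext n \o @into_ext n)].
Proof. exact: (svalP (cid (AE_model_step (chain n)))). Qed.

Definition chain_step n (x : chain n) : chain n.+1 := from_ext (into_ext x).
Definition ext_step n (y : ext_model n) : ext_model n.+1 := into_ext (from_ext y).

Lemma embedding_chain_step n : embedding (@chain_step n).
Proof. by case: (next_chainP n) => _ h1 h2 _; exact: embedding_comp h1 h2. Qed.

Lemma elementary_chain_step n : elementary (@chain_step n).
Proof. by case: (next_chainP n). Qed.

Lemma embedding_ext_step n : embedding (@ext_step n).
Proof.
by case: (next_chainP n) => _ _ h2 _; case: (next_chainP n.+1) => _ h1 _ _; exact: embedding_comp.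
Qed.

Local Notation U := (chain_union embedding_chain_step).

Lemma ext_models_union : is_union ext_step (fun n (y : ext_model n) => chain_in _ (from_ext y) : U).
Proof.
have [hemb hc hs] := chain_union_is_union embedding_chain_step.
split => [n|n y|z].
- by case: (next_chainP n) => _ _ h2 _; exact: embedding_comp h2 (hemb n.+1).
- exact: hc.
- by have [n [x <-]] := hs z; exists n, (into_ext x); rewrite -(hc n x).
Qed.

Lemma inductive_model_M0 : inductive T -> models M0 T.
Proof.
move=> hind; have hU : models U T.
  by apply: (hind _ _ embedding_ext_step) ext_models_union => n; case: (next_chainP n).
have hel := elementary_union (chain_union_is_union embedding_chain_step)
  elementary_chain_step (n := 0%N).
by move=> c hc v; rewrite -(hel c.1 v) -(hel c.2 v); exact: hU.
Qed.

End ChainOfModels.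

Theorem mainTheorem5 (R : realType) (L : Lang R) (T : theory L) :
  closed_theory T -> (inductive T <-> AE_theory T).
Proof.
move=> _; split=> [hind|[T' [hAE hT']] Ms es hes hMs N gs hu].
  exists (AE_consequence T); split=> [c []//|M]; split=> [hM c [_ h] v|hM]; first exact: h.
  exact: (@inductive_model_M0 R L T (@Build_AE_model R L T M hM) hind).
apply/hT' => c hc v; apply: (AE_condition_union hu (hAE c hc)) => n w.
exact: (proj1 (hT' (Ms n)) (hMs n)).
Qed.
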